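(* Let $0<p<\infty$, $0<\alpha<\infty$, and let $\beta$ be real with $\beta p<-1$ and $\nu:=-(\alpha+\beta+\frac1p)>0$. Let $K>1$ be sufficiently large, $\delta_n=K^{-n}$, $f_n(z)=\delta_n^\nu(1+\delta_n-z)^\beta$ ($z\in\mathbb{D}$), and $X_{\nu,\beta}=\{\sum_{n=1}^\infty a_nf_n:(a_n)\in\ell_\infty\}$. Then the map $\Phi:\ell_\infty\to X_{\nu,\beta}$, $\Phi((a_n))=\sum_{n=1}^\infty a_nf_n$, is an isomorphism between $\ell_\infty$ and $X_{\nu,\beta}$ endowed with the norm of $H(p,\infty,\alpha)$; that is, $X_{\nu,\beta}\subseteq H(p,\infty,\alpha)$, $\Phi$ is a linear bijection, and there are constants $c,C>0$ with $c\|{\bf a}\|_{\ell_\infty}\le\|\Phi{\bf a}\|_{p,\infty,\alpha}\le C\|{\bf a}\|_{\ell_\infty}$ for all ${\bf a}\in\ell_\infty$.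
   Context: $\mathbb{D}$ is the unit disk; powers use the principal branch. The series converges uniformly on compact subsets of $\mathbb{D}$. $M_p(r,f)=\left(\int_0^{2\pi}|f(re^{i\theta})|^p\frac{d\theta}{2\pi}\right)^{1/p}$; $H(p,\infty,\alpha)$ is the space of analytic $f$ on $\mathbb{D}$ with $\|f\|_{p,\infty,\alpha}=\sup_{0\le r<1}(1-r)^\alpha M_p(r,f)<\infty$. *)

From Stdlib Require Import Reals Lra.
From Coquelicot Require Import Coquelicot.
Open Scope R_scope.

(* Real power x^y for x >= 0, with the convention 0^y = 0 (y > 0 in uses). *)
Definition rpow (x y : R) : R := if Req_EM_T x 0 then 0 else Rpower x y.

(* Principal argument in (-PI, PI]. *)
Definition Arg (w : C) : R :=
  let x := fst w in let y := snd w in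
  if Rlt_dec 0 x then atan (y / x)
  else if Rlt_dec x 0 then
    (if Rle_dec 0 y then atan (y / x) + PI else atan (y / x) - PI)
  else if Rlt_dec 0 y then PI / 2
  else if Rlt_dec y 0 then - (PI / 2) else 0.

(* Principal branch w^b = exp(b (ln|w| + i Arg w)) for real b, w <> 0. *)
Definition Cpow (w : C) (b : R) : C :=
  if Ceq_dec w 0 then 0
  else let m := Rpower (Cmod w) b in let t := b * Arg w in (m * cos t, m * sin t).

Definition cis (t : R) : C := (cos t, sin t).

Definition in_disk (z : C) : Prop := Cmod z < 1.
Definition analytic_on_disk (f : C -> C) : Prop :=
  forall z : C, in_disk z -> @ex_derive C_AbsRing C_NormedModule f z.

Definition Mp (p r : R) (f : C -> C) : R :=
  rpow (RInt (fun t => rpow (Cmod (f (Cmult (RtoC r) (cis t)))) p) 0 (2 * PI) / (2 * PI)) (1 / p).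

Definition Hnorm (p alpha : R) (f : C -> C) : Rbar :=
  Lub_Rbar (fun x => exists r, 0 <= r < 1 /\ x = rpow (1 - r) alpha * Mp p r f).

Definition in_H (p alpha : R) (f : C -> C) : Prop :=
  analytic_on_disk f /\ is_finite (Hnorm p alpha f).

Definition bounded_seq (a : nat -> C) : Prop := exists M, forall n, Cmod (a n) <= M.
Definition linf_norm (a : nat -> C) : R := real (Lub_Rbar (fun x => exists n, x = Cmod (a n))).

Definition delta (K : R) (n : nat) : R := / (K ^ n).
Definition fn (K nu beta : R) (n : nat) (z : C) : C :=
  Cmult (RtoC (Rpower (delta K n) nu)) (Cpow (Cminus (RtoC (1 + delta K n)) z) beta).

(* The k-th term (k = 0,1,...) corresponds to the paper's index n = k+1:
   sequence a : nat -> C stands for (a_1, a_2, ...) with a_{k+1} = a k. *)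
Definition term (K nu beta : R) (a : nat -> C) (z : C) (k : nat) : C :=
  Cmult (a k) (fn K nu beta (S k) z).

Definition Phi (K nu beta : R) (a : nat -> C) (z : C) : C :=
  (Series (fun k => fst (term K nu beta a z k)), Series (fun k => snd (term K nu beta a z k))).

From Pilot Require Import Defs.
From Stdlib Require Import Reals Lra Lia Classical.
From Coquelicot Require Import Coquelicot.
Open Scope R_scope.

(* Each f_n has its singularity at 1 + delta_n, just outside the disk, and on the circle of
   radius r one has |1 + delta_n - r e^(it)| ~ delta_n + (1 - r) + |t|.  Since the scales
   delta_n = K^(-n) are lacunary and nu > 0 > nu + beta, the sum over n of
   delta_n^nu (delta_n + x)^beta is a two-sided geometric sum peaked at the scale delta_n ~ x,
   hence O(x^(nu + beta)).  This gives |Phi a (r e^(it))| <= C |a|_oo (1 - r + |t|)^(nu + beta),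
   and integrating, using (nu + beta) p + 1 = - alpha p < 0, gives
   (1 - r)^alpha M_p(r, Phi a) <= C |a|_oo.  Conversely, at r = 1 - delta_k and |t| <= delta_k
   the k-th term has modulus >= c |a_k| delta_k^(nu + beta), while for K large all other terms
   together are at most a small multiple of |a|_oo delta_k^(nu + beta); taking |a_k| >= |a|_oo / 2
   gives the lower bound, and with linearity the injectivity.  Analyticity of Phi a follows from a
   second-order Taylor bound for w |-> w^beta that is uniform on half-planes Re w >= rho > 0. *)

Lemma Rpower_pos x y : 0 < Rpower x y.
Proof. exact (exp_pos _). Qed.

Lemma exp_le_mono x y : x <= y -> exp x <= exp y.
Proof. intros H. destruct (Req_dec x y); [subst; lra | left; apply exp_increasing; lra]. Qed.

Lemma Rpower_le_nonpos a0 a c : 0 < a0 -> a0 <= a -> c <= 0 -> Rpower a c <= Rpower a0 c.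
Proof. intros H0 H Hc. apply exp_le_mono. pose proof (ln_le a0 a H0 H). nra. Qed.

Lemma Rpower_inv_l x c : 0 < x -> Rpower (/ x) c = Rpower x (- c).
Proof. intros H. unfold Rpower. rewrite ln_Rinv by auto. f_equal. ring. Qed.

Lemma Rpower_div a b c : 0 < a -> 0 < b -> Rpower (a / b) c = Rpower a c * Rpower b (- c).
Proof.
  intros Ha Hb. unfold Rdiv. rewrite <- Rpower_mult_distr by (try apply Rinv_0_lt_compat; auto).
  rewrite Rpower_inv_l by auto. reflexivity.
Qed.

Lemma Rpower_le_1_nonneg u c : 0 < u <= 1 -> 0 <= c -> Rpower u c <= 1.
Proof.
  intros Hu Hc. unfold Rpower. rewrite <- exp_0. apply exp_le_mono.
  pose proof (ln_le u 1 ltac:(lra) ltac:(lra)). rewrite ln_1 in H. nra.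
Qed.

Lemma Rpower_le_1_nonpos u c : 1 <= u -> c <= 0 -> Rpower u c <= 1.
Proof.
  intros Hu Hc. unfold Rpower. rewrite <- exp_0. apply exp_le_mono.
  pose proof (ln_le 1 u ltac:(lra) Hu). rewrite ln_1 in H. nra.
Qed.

Lemma Rpower_inv_lt_1 K c : 1 < K -> 0 < c -> 0 < Rpower (/ K) c < 1.
Proof.
  intros HK Hc. split; [apply Rpower_pos|].
  unfold Rpower. rewrite <- exp_0. apply exp_increasing.
  assert (ln (/ K) < 0).
  { rewrite <- ln_1. apply ln_increasing; [apply Rinv_0_lt_compat; lra|].
    rewrite <- Rinv_1. apply Rinv_lt_contravar; lra. }
  nra.
Qed.

Lemma Rpower_inv_le_eventually c eta : 0 < c -> 0 < eta ->
  exists K0, 1 < K0 /\ forall K, K0 < K -> Rpower (/ K) c <= eta.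
Proof.
  intros Hc Heta. pose proof (Rpower_pos eta (- (1 / c))) as HK1.
  exists (1 + Rpower eta (- (1 / c))). split; [lra|]. intros K HK.
  rewrite Rpower_inv_l by lra.
  eapply Rle_trans; [apply (Rpower_le_nonpos (Rpower eta (- (1 / c))) K (- c)); lra|].
  rewrite Rpower_mult. replace (- (1 / c) * - c) with 1 by (field; lra). rewrite Rpower_1 by lra. lra.
Qed.

Lemma rpow_nonneg x y : 0 <= rpow x y.
Proof. unfold rpow. destruct (Req_EM_T x 0); [lra | left; apply Rpower_pos]. Qed.

Lemma rpow_of_pos x y : 0 < x -> rpow x y = Rpower x y.
Proof. intros H. unfold rpow. destruct (Req_EM_T x 0); [lra | reflexivity]. Qed.

Lemma rpow_0_l y : rpow 0 y = 0.
Proof. unfold rpow. destruct (Req_EM_T 0 0); [reflexivity | lra]. Qed.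

Lemma rpow_mult_distr x y c : 0 <= x -> 0 <= y -> rpow (x * y) c = rpow x c * rpow y c.
Proof.
  intros Hx Hy.
  destruct (Req_dec x 0); [subst; rewrite Rmult_0_l, !rpow_0_l; ring|].
  destruct (Req_dec y 0); [subst; rewrite Rmult_0_r, !rpow_0_l; ring|].
  assert (0 < x * y) by (apply Rmult_lt_0_compat; lra).
  rewrite !rpow_of_pos by lra. symmetry. apply Rpower_mult_distr; lra.
Qed.

Lemma rpow_Rpower x c d : 0 < x -> rpow (Rpower x c) d = Rpower x (c * d).
Proof. intros H. rewrite rpow_of_pos by apply Rpower_pos. apply Rpower_mult. Qed.

Lemma rpow_rpow_inv x p : 0 <= x -> p <> 0 -> rpow (rpow x p) (1 / p) = x.
Proof.
  intros Hx Hp. destruct (Req_dec x 0); [subst; rewrite !rpow_0_l; reflexivity|].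
  rewrite (rpow_of_pos x p), rpow_Rpower by lra.
  replace (p * (1 / p)) with 1 by (field; auto). apply Rpower_1; lra.
Qed.

Lemma rpow_le_compat x y c : 0 <= x -> x <= y -> 0 < c -> rpow x c <= rpow y c.
Proof.
  intros Hx Hxy Hc. destruct (Req_dec x 0); [subst; rewrite rpow_0_l; apply rpow_nonneg|].
  rewrite !rpow_of_pos by lra. apply Rle_Rpower_l; lra.
Qed.

Lemma Cmod_le_Rabs_re_im (v : C) : Cmod v <= Rabs (fst v) + Rabs (snd v).
Proof.
  pose proof (Rabs_pos (fst v)). pose proof (Rabs_pos (snd v)).
  unfold Cmod. rewrite <- (sqrt_pow2 (Rabs (fst v) + Rabs (snd v))) by lra.
  apply sqrt_le_1_alt. rewrite <- (pow2_abs (fst v)), <- (pow2_abs (snd v)). nra.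
Qed.

Lemma Rabs_fst_le_Cmod (v : C) : Rabs (fst v) <= Cmod v.
Proof. eapply Rle_trans; [apply Rmax_l | apply Rmax_Cmod]. Qed.

Lemma Rabs_snd_le_Cmod (v : C) : Rabs (snd v) <= Cmod v.
Proof. eapply Rle_trans; [apply Rmax_r | apply Rmax_Cmod]. Qed.

Lemma fst_le_Cmod (v : C) : fst v <= Cmod v.
Proof. pose proof (Rabs_fst_le_Cmod v). apply Rabs_le_between in H. lra. Qed.

Lemma Rabs_re_im_sq_le (u : C) : (Rabs (fst u) + Rabs (snd u)) ^ 2 <= 2 * Cmod u ^ 2.
Proof.
  rewrite Cmod2_alt. unfold Re, Im.
  rewrite <- (pow2_abs (fst u)), <- (pow2_abs (snd u)).
  pose proof (pow2_ge_0 (Rabs (fst u) - Rabs (snd u))). nra.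
Qed.

Lemma fst_sub_ge (c : R) (z : C) : c - Cmod z <= fst (Cminus (RtoC c) z).
Proof. cbn. pose proof (Rabs_fst_le_Cmod z). apply Rabs_le_between in H. lra. Qed.

Lemma Cmod_sub_ge (c : R) (z : C) : c - Cmod z <= Cmod (Cminus (RtoC c) z).
Proof. eapply Rle_trans; [apply fst_sub_ge | apply fst_le_Cmod]. Qed.

Lemma Cmod_circle r t : 0 <= r -> Cmod (Cmult (RtoC r) (cis t)) = r.
Proof.
  intros Hr. rewrite Cmod_mult, Cmod_R. unfold cis, Cmod. cbn [fst snd].
  rewrite <- !Rsqr_pow2, Rplus_comm, sin2_cos2, sqrt_1. rewrite Rabs_right; lra.
Qed.

(** * Complex powers on the right half-plane *)

(* [w^b] in coordinates at [w = (x, y)], [x > 0], where [Arg w = atan (y / x)].  [Defs.Cpow] is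
   written qualified because Coquelicot's [Cpow] (natural exponents) shadows it. *)
Definition pow_modulus (b x y : R) : R := Rpower (sqrt (x ^ 2 + y ^ 2)) b.

Definition pow_re (b x y : R) : R := pow_modulus b x y * cos (b * atan (y / x)).

Definition pow_im (b x y : R) : R := pow_modulus b x y * sin (b * atan (y / x)).

Lemma Cpow_right_half_plane (w : C) b : 0 < fst w ->
  Defs.Cpow w b = (pow_re b (fst w) (snd w), pow_im b (fst w) (snd w)).
Proof.
  intros Hw. unfold Defs.Cpow, pow_re, pow_im, pow_modulus, Arg.
  destruct (Ceq_dec w 0) as [E|_]; [subst w; simpl in Hw; lra|].
  destruct (Rlt_dec 0 (fst w)); [reflexivity | lra].
Qed.

Lemma Cmod_Cpow (w : C) b : w <> 0 -> Cmod (Defs.Cpow w b) = Rpower (Cmod w) b.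
Proof.
  intros Hw. unfold Defs.Cpow. destruct (Ceq_dec w 0) as [E|_]; [contradiction|].
  unfold Cmod at 1. cbn [fst snd].
  set (m := Rpower (Cmod w) b). set (t := b * Arg w).
  replace ((m * cos t) ^ 2 + (m * sin t) ^ 2) with (m ^ 2 * ((sin t) ^ 2 + (cos t) ^ 2)) by ring.
  rewrite <- !Rsqr_pow2, sin2_cos2, Rmult_1_r, Rsqr_pow2.
  apply sqrt_pow2. left. apply Rpower_pos.
Qed.

Lemma sqrt_sum_sq_pos x y : 0 < x -> 0 < sqrt (x ^ 2 + y ^ 2).
Proof. intros Hx. apply sqrt_lt_R0. pose proof (pow2_ge_0 y). nra. Qed.

Lemma polar_atan x y : 0 < x ->
  cos (atan (y / x)) * sqrt (x ^ 2 + y ^ 2) = x /\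
  sin (atan (y / x)) * sqrt (x ^ 2 + y ^ 2) = y.
Proof.
  intros Hx. pose proof (sqrt_sum_sq_pos x y Hx).
  assert (E : sqrt (1 + (y / x)²) = sqrt (x ^ 2 + y ^ 2) / x).
  { replace (1 + (y / x)²) with ((x ^ 2 + y ^ 2) / (x * x)) by (unfold Rsqr; field; lra).
    rewrite sqrt_div_alt by nra. rewrite sqrt_square by lra. reflexivity. }
  rewrite cos_atan, sin_atan, E. split; field; lra.
Qed.

Lemma pow_modulus_pred b x y : 0 < x ->
  pow_modulus (b - 1) x y * sqrt (x ^ 2 + y ^ 2) = pow_modulus b x y.
Proof.
  intros Hx. pose proof (sqrt_sum_sq_pos x y Hx).
  unfold pow_modulus, Rpower. rewrite <- (exp_ln (sqrt (x ^ 2 + y ^ 2))) at 2 by lra.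
  rewrite <- exp_plus. f_equal. ring.
Qed.

Lemma is_derive_pow_re_im b x0 y0 ux uy s : 0 < x0 + s * ux ->
  is_derive (fun s => pow_re b (x0 + s * ux) (y0 + s * uy)) s
    (b * (pow_re (b - 1) (x0 + s * ux) (y0 + s * uy) * ux
          - pow_im (b - 1) (x0 + s * ux) (y0 + s * uy) * uy)) /\
  is_derive (fun s => pow_im b (x0 + s * ux) (y0 + s * uy)) s
    (b * (pow_im (b - 1) (x0 + s * ux) (y0 + s * uy) * ux
          + pow_re (b - 1) (x0 + s * ux) (y0 + s * uy) * uy)).
Proof.
  intros Hx.
  destruct (polar_atan _ (y0 + s * uy) Hx) as [Hc Hs].
  pose proof (pow_modulus_pred b _ (y0 + s * uy) Hx) as HE.
  pose proof (sqrt_sum_sq_pos _ (y0 + s * uy) Hx) as Hr.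
  assert (Hq : 0 < (x0 + s * ux) ^ 2 + (y0 + s * uy) ^ 2)
    by (pose proof (pow2_ge_0 (y0 + s * uy)); nra).
  pose proof (sqrt_sqrt _ (Rlt_le _ _ Hq)) as Hr2.
  unfold pow_re, pow_im.
  set (th := atan ((y0 + s * uy) / (x0 + s * ux))) in *.
  assert (Hcm : cos ((b - 1) * th) = cos (b * th) * cos th + sin (b * th) * sin th).
  { replace ((b - 1) * th) with (b * th - th) by ring. apply cos_minus. }
  assert (Hsm : sin ((b - 1) * th) = sin (b * th) * cos th - cos (b * th) * sin th).
  { replace ((b - 1) * th) with (b * th - th) by ring. apply sin_minus. }
  rewrite Hcm, Hsm.
  unfold pow_modulus, Rpower in HE |- *.
  set (X := x0 + s * ux) in *. set (Y := y0 + s * uy) in *.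
  set (R := sqrt (X ^ 2 + Y ^ 2)) in *.
  assert (Hth : (uy / X + Y * (- ux / (X * X))) * / (1 + Y / X * (Y / X)) = (X * uy - Y * ux) / (R * R)).
  { replace (1 + Y / X * (Y / X)) with ((R * R) / (X * X)) by (rewrite Hr2; field; lra).
    field. split; lra. }
  split; auto_derive;
    fold X Y; replace (X * (X * 1) + Y * (Y * 1)) with (X ^ 2 + Y ^ 2) by ring; fold R;
    try (repeat split; lra);
    change (atan (Y * / X)) with th; rewrite <- HE;
    replace (1 * uy * / X + Y * (- (1 * ux) * / (X * X))) with (uy / X + Y * (- ux / (X * X)))
      by (unfold Rdiv; ring);
    replace (1 + Y * / X * (Y * / X * 1)) with (1 + Y / X * (Y / X)) by (unfold Rdiv; ring);
    rewrite Hth, <- Hc, <- Hs; field; lra.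
Qed.

Lemma derive_continuity_pt (f : R -> R) x l : is_derive f x l -> continuity_pt f x.
Proof.
  intros H. apply continuity_pt_filterlim.
  apply (ex_derive_continuous (K := R_AbsRing) f x). exists l. exact H.
Qed.

Lemma taylor_first_order_bound (g d dd : R -> R) B :
  (forall s, 0 <= s <= 1 -> is_derive g s (d s)) ->
  (forall s, 0 <= s <= 1 -> is_derive d s (dd s)) ->
  (forall s, 0 <= s <= 1 -> Rabs (dd s) <= B) ->
  Rabs (g 1 - g 0 - d 0) <= B.
Proof.
  intros Hg Hd HB.
  destruct (MVT_gen (fun s => g s - s * d 0) 0 1 (fun s => d s - d 0)) as [c [Hc Hc2]].
  - intros x Hx. rewrite Rmin_left, Rmax_right in Hx by lra.
    replace (d x - d 0) with (d x - 1 * d 0) by ring.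
    apply (is_derive_minus (V := R_NormedModule)); [apply Hg; lra|].
    apply (is_derive_scal_l (fun s => s) x 1 (d 0)), (is_derive_id (K := R_AbsRing)).
  - intros x Hx. rewrite Rmin_left, Rmax_right in Hx by lra.
    apply continuity_pt_minus; [apply (derive_continuity_pt g x (d x)), Hg; lra|].
    apply continuity_pt_mult; [apply continuity_pt_id | apply continuity_pt_const; intros ??; reflexivity].
  - rewrite Rmin_left, Rmax_right in Hc by lra.
    destruct (MVT_gen d 0 c dd) as [e [He He2]].
    + intros x Hx. apply Hd. unfold Rmin, Rmax in Hx. destruct (Rle_dec 0 c); lra.
    + intros x Hx. apply (derive_continuity_pt d x (dd x)), Hd.
      unfold Rmin, Rmax in Hx. destruct (Rle_dec 0 c); lra.
    + replace (g 1 - g 0 - d 0) with ((g 1 - 1 * d 0) - (g 0 - 0 * d 0)) by ring.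
      rewrite Hc2, He2.
      assert (He01 : 0 <= e <= 1) by (unfold Rmin, Rmax in He; destruct (Rle_dec 0 c); lra).
      specialize (HB e He01). pose proof (Rabs_pos (dd e)).
      replace (dd e * (c - 0) * (1 - 0)) with (dd e * c) by ring.
      rewrite Rabs_mult, (Rabs_right c) by lra. nra.
Qed.

Lemma sqrt_sum_sq_ge x y : 0 <= x -> x <= sqrt (x ^ 2 + y ^ 2).
Proof.
  intros Hx. rewrite <- (sqrt_pow2 x Hx) at 1. apply sqrt_le_1_alt.
  pose proof (pow2_ge_0 y). lra.
Qed.

Lemma pow_modulus_le c x y r : 0 < r -> r <= x -> c <= 0 -> pow_modulus c x y <= Rpower r c.
Proof.
  intros Hr Hx Hc. apply Rpower_le_nonpos; auto.
  eapply Rle_trans; [exact Hx | apply sqrt_sum_sq_ge; lra].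
Qed.

Lemma Rabs_pow_re_le c x y : Rabs (pow_re c x y) <= pow_modulus c x y.
Proof.
  unfold pow_re. pose proof (Rpower_pos (sqrt (x ^ 2 + y ^ 2)) c) as Hm. fold (pow_modulus c x y) in Hm.
  rewrite Rabs_mult, (Rabs_right (pow_modulus c x y)) by lra.
  rewrite <- (Rmult_1_r (pow_modulus c x y)) at 2. apply Rmult_le_compat_l; [lra|].
  apply Rabs_le. pose proof (COS_bound (c * atan (y / x))). lra.
Qed.

Lemma Rabs_pow_im_le c x y : Rabs (pow_im c x y) <= pow_modulus c x y.
Proof.
  unfold pow_im. pose proof (Rpower_pos (sqrt (x ^ 2 + y ^ 2)) c) as Hm. fold (pow_modulus c x y) in Hm.
  rewrite Rabs_mult, (Rabs_right (pow_modulus c x y)) by lra.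
  rewrite <- (Rmult_1_r (pow_modulus c x y)) at 2. apply Rmult_le_compat_l; [lra|].
  apply Rabs_le. pose proof (SIN_bound (c * atan (y / x))). lra.
Qed.

Lemma Rabs_minus_le a b : Rabs (a - b) <= Rabs a + Rabs b.
Proof. unfold Rminus. eapply Rle_trans; [apply Rabs_triang | rewrite Rabs_Ropp; lra]. Qed.

(* The real part of (p1 + i p2) (a + i b)^2. *)
Lemma Rabs_rotation_sq_le p1 p2 a b E : Rabs p1 <= E -> Rabs p2 <= E ->
  Rabs ((p1 * a - p2 * b) * a - (p2 * a + p1 * b) * b) <= E * (Rabs a + Rabs b) ^ 2.
Proof.
  intros H1 H2.
  assert (Q1 : Rabs (p1 * a - p2 * b) <= Rabs p1 * Rabs a + Rabs p2 * Rabs b)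
    by (eapply Rle_trans; [apply Rabs_minus_le | rewrite !Rabs_mult; lra]).
  assert (Q2 : Rabs (p2 * a + p1 * b) <= Rabs p2 * Rabs a + Rabs p1 * Rabs b)
    by (eapply Rle_trans; [apply Rabs_triang | rewrite !Rabs_mult; lra]).
  eapply Rle_trans; [apply Rabs_minus_le|]. rewrite !Rabs_mult.
  pose proof (Rabs_pos a). pose proof (Rabs_pos b). pose proof (Rabs_pos p1). pose proof (Rabs_pos p2).
  set (A := Rabs a) in *. set (B := Rabs b) in *. set (P := Rabs p1) in *. set (Q := Rabs p2) in *.
  assert (0 <= (E - P) * (A * A + B * B)) by (apply Rmult_le_pos; nra).
  assert (0 <= (E - Q) * (A * B)) by (apply Rmult_le_pos; nra).
  assert (Rabs (p1 * a - p2 * b) * A <= (P * A + Q * B) * A) by (apply Rmult_le_compat_r; lra).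
  assert (Rabs (p2 * a + p1 * b) * B <= (Q * A + P * B) * B) by (apply Rmult_le_compat_r; lra).
  nra.
Qed.

Lemma is_derive_scal_diff (f g : R -> R) df dg s b u v :
  is_derive f s df -> is_derive g s dg ->
  is_derive (fun s => b * (f s * u - g s * v)) s (b * (df * u - dg * v)).
Proof.
  intros Hf Hg. apply (is_derive_scal (fun s => f s * u - g s * v) s b).
  apply (is_derive_minus (fun s => f s * u) (fun s => g s * v));
    [exact (is_derive_scal_l f s df u Hf) | exact (is_derive_scal_l g s dg v Hg)].
Qed.

Lemma is_derive_scal_sum (f g : R -> R) df dg s b u v :
  is_derive f s df -> is_derive g s dg ->
  is_derive (fun s => b * (f s * u + g s * v)) s (b * (df * u + dg * v)).
Proof.
  intros Hf Hg. apply (is_derive_scal (fun s => f s * u + g s * v) s b).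
  apply (is_derive_plus (fun s => f s * u) (fun s => g s * v));
    [exact (is_derive_scal_l f s df u Hf) | exact (is_derive_scal_l g s dg v Hg)].
Qed.

Section PowerOnSegment.

Variables (b rho x0 y0 ux uy : R).
Hypotheses (Hb : b <= 0) (Hrho : 0 < rho)
  (Hseg : forall s, 0 <= s <= 1 -> rho <= x0 + s * ux).

Let Xs s := x0 + s * ux.
Let Ys s := y0 + s * uy.

Let second_derivative_bound :=
  Rabs (b * (b - 1)) * Rpower rho (b - 1 - 1) * (Rabs ux + Rabs uy) ^ 2.

Lemma pow_re_segment_taylor :
  Rabs (pow_re b (x0 + ux) (y0 + uy) - pow_re b x0 y0
        - b * (pow_re (b - 1) x0 y0 * ux - pow_im (b - 1) x0 y0 * uy))
  <= second_derivative_bound.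
Proof.
  pose proof (taylor_first_order_bound (fun s => pow_re b (Xs s) (Ys s))
    (fun s => b * (pow_re (b - 1) (Xs s) (Ys s) * ux - pow_im (b - 1) (Xs s) (Ys s) * uy))
    (fun s => b * ((b - 1) * (pow_re (b - 1 - 1) (Xs s) (Ys s) * ux - pow_im (b - 1 - 1) (Xs s) (Ys s) * uy) * ux
               - (b - 1) * (pow_im (b - 1 - 1) (Xs s) (Ys s) * ux + pow_re (b - 1 - 1) (Xs s) (Ys s) * uy) * uy))
    second_derivative_bound) as H.
  unfold Xs, Ys in H. rewrite !Rmult_1_l, !Rmult_0_l, !Rplus_0_r in H. apply H; clear H.
  - intros s Hs. apply is_derive_pow_re_im. pose proof (Hseg s Hs). lra.
  - intros s Hs. assert (Hx : 0 < x0 + s * ux) by (pose proof (Hseg s Hs); lra).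
    destruct (is_derive_pow_re_im (b - 1) x0 y0 ux uy s Hx) as [H1 H2].
    exact (is_derive_scal_diff _ _ _ _ s b ux uy H1 H2).
  - intros s Hs. unfold second_derivative_bound.
    pose proof (pow_modulus_le (b - 1 - 1) (Xs s) (Ys s) rho Hrho (Hseg s Hs) ltac:(lra)).
    pose proof (Rabs_pow_re_le (b - 1 - 1) (Xs s) (Ys s)).
    pose proof (Rabs_pow_im_le (b - 1 - 1) (Xs s) (Ys s)).
    unfold Xs, Ys in *.
    match goal with |- Rabs (b * ((b - 1) * (?p1 * _ - ?p2 * _) * _ - _)) <= _ =>
      replace (b * ((b - 1) * (p1 * ux - p2 * uy) * ux - (b - 1) * (p2 * ux + p1 * uy) * uy))
        with ((b * (b - 1)) * ((p1 * ux - p2 * uy) * ux - (p2 * ux + p1 * uy) * uy)) by ring;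
      rewrite Rabs_mult, Rmult_assoc; apply Rmult_le_compat_l; [apply Rabs_pos|];
      eapply Rle_trans; [apply (Rabs_rotation_sq_le p1 p2) with (E := Rpower rho (b - 1 - 1)); lra|];
      lra
    end.
Qed.

Lemma pow_im_segment_taylor :
  Rabs (pow_im b (x0 + ux) (y0 + uy) - pow_im b x0 y0
        - b * (pow_im (b - 1) x0 y0 * ux + pow_re (b - 1) x0 y0 * uy))
  <= second_derivative_bound.
Proof.
  pose proof (taylor_first_order_bound (fun s => pow_im b (Xs s) (Ys s))
    (fun s => b * (pow_im (b - 1) (Xs s) (Ys s) * ux + pow_re (b - 1) (Xs s) (Ys s) * uy))
    (fun s => b * ((b - 1) * (pow_im (b - 1 - 1) (Xs s) (Ys s) * ux + pow_re (b - 1 - 1) (Xs s) (Ys s) * uy) * ux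
               + (b - 1) * (pow_re (b - 1 - 1) (Xs s) (Ys s) * ux - pow_im (b - 1 - 1) (Xs s) (Ys s) * uy) * uy))
    second_derivative_bound) as H.
  unfold Xs, Ys in H. rewrite !Rmult_1_l, !Rmult_0_l, !Rplus_0_r in H. apply H; clear H.
  - intros s Hs. apply is_derive_pow_re_im. pose proof (Hseg s Hs). lra.
  - intros s Hs. assert (Hx : 0 < x0 + s * ux) by (pose proof (Hseg s Hs); lra).
    destruct (is_derive_pow_re_im (b - 1) x0 y0 ux uy s Hx) as [H1 H2].
    exact (is_derive_scal_sum _ _ _ _ s b ux uy H2 H1).
  - intros s Hs. unfold second_derivative_bound.
    pose proof (pow_modulus_le (b - 1 - 1) (Xs s) (Ys s) rho Hrho (Hseg s Hs) ltac:(lra)).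
    pose proof (Rabs_pow_re_le (b - 1 - 1) (Xs s) (Ys s)).
    pose proof (Rabs_pow_im_le (b - 1 - 1) (Xs s) (Ys s)).
    unfold Xs, Ys in *.
    match goal with |- Rabs (b * ((b - 1) * (?p2 * _ + ?p1 * _) * _ + _)) <= _ =>
      replace (b * ((b - 1) * (p2 * ux + p1 * uy) * ux + (b - 1) * (p1 * ux - p2 * uy) * uy))
        with ((b * (b - 1)) * ((p2 * ux - (- p1) * uy) * ux - (- p1 * ux + p2 * uy) * uy)) by ring;
      rewrite Rabs_mult, Rmult_assoc; apply Rmult_le_compat_l; [apply Rabs_pos|];
      eapply Rle_trans;
        [apply (Rabs_rotation_sq_le p2 (- p1)) with (E := Rpower rho (b - 1 - 1));
         rewrite ?Rabs_Ropp; lra|];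
      lra
    end.
Qed.

End PowerOnSegment.

Lemma Cpow_taylor (b rho : R) (w u : C) :
  b <= 0 -> 0 < rho -> rho <= fst w -> Cmod u <= rho / 2 ->
  Cmod (Cminus (Cminus (Defs.Cpow (Cplus w u) b) (Defs.Cpow w b))
               (Cmult (Cmult (RtoC b) (Defs.Cpow w (b - 1))) u))
  <= 4 * Rabs (b * (b - 1)) * Rpower (rho / 2) (b - 1 - 1) * Cmod u ^ 2.
Proof.
  intros Hb Hrho Hw Hu.
  pose proof (Rabs_re_im_sq_le u) as Hu2.
  destruct w as [x0 y0], u as [ux uy]. cbn [fst snd] in *.
  pose proof (Rabs_fst_le_Cmod (ux, uy)) as Hux. cbn [fst snd] in Hux.
  assert (Hseg : forall s, 0 <= s <= 1 -> rho / 2 <= x0 + s * ux).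
  { intros s Hs. assert (Rabs (s * ux) <= rho / 2).
    { rewrite Rabs_mult, (Rabs_right s) by lra. nra. }
    apply Rabs_le_between in H. lra. }
  pose proof (pow_re_segment_taylor b (rho / 2) x0 y0 ux uy Hb ltac:(lra) Hseg) as Hre.
  pose proof (pow_im_segment_taylor b (rho / 2) x0 y0 ux uy Hb ltac:(lra) Hseg) as Him.
  rewrite (Cpow_right_half_plane (_ + _)%C) by (cbn; pose proof (Hseg 1); lra).
  rewrite !Cpow_right_half_plane by (cbn; lra).
  eapply Rle_trans; [apply Cmod_le_Rabs_re_im|].
  cbn [fst snd Cplus Cminus Cmult Copp RtoC].
  match goal with |- Rabs ?re + Rabs ?im <= _ =>
    replace re with (pow_re b (x0 + ux) (y0 + uy) - pow_re b x0 y0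
                     - b * (pow_re (b - 1) x0 y0 * ux - pow_im (b - 1) x0 y0 * uy)) by ring;
    replace im with (pow_im b (x0 + ux) (y0 + uy) - pow_im b x0 y0
                     - b * (pow_im (b - 1) x0 y0 * ux + pow_re (b - 1) x0 y0 * uy)) by ring
  end.
  assert (0 <= Rabs (b * (b - 1)) * Rpower (rho / 2) (b - 1 - 1))
    by (apply Rmult_le_pos; [apply Rabs_pos | left; apply Rpower_pos]).
  assert (Rabs (b * (b - 1)) * Rpower (rho / 2) (b - 1 - 1) * (Rabs ux + Rabs uy) ^ 2
          <= Rabs (b * (b - 1)) * Rpower (rho / 2) (b - 1 - 1) * (2 * Cmod (ux, uy) ^ 2))
    by (apply Rmult_le_compat_l; auto).
  lra.
Qed.

(** * The lacunary series: convergence and analyticity *)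

Lemma fst_sum_n (a : nat -> C) n : fst (sum_n a n) = sum_n (fun k => fst (a k)) n.
Proof. induction n; [rewrite !sum_O | rewrite !sum_Sn, <- IHn]; reflexivity. Qed.

Lemma snd_sum_n (a : nat -> C) n : snd (sum_n a n) = sum_n (fun k => snd (a k)) n.
Proof. induction n; [rewrite !sum_O | rewrite !sum_Sn, <- IHn]; reflexivity. Qed.

Lemma is_series_fst (a : nat -> C) l : is_series a l -> is_series (fun n => fst (a n)) (fst l).
Proof.
  unfold is_series. intros H. apply filterlim_locally. intros eps.
  generalize (proj1 (filterlim_locally _ _) H eps). apply filter_imp. intros n [H1 _].
  rewrite <- fst_sum_n. exact H1.
Qed.

Lemma is_series_snd (a : nat -> C) l : is_series a l -> is_series (fun n => snd (a n)) (snd l).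
Proof.
  unfold is_series. intros H. apply filterlim_locally. intros eps.
  generalize (proj1 (filterlim_locally _ _) H eps). apply filter_imp. intros n [_ H2].
  rewrite <- snd_sum_n. exact H2.
Qed.

Lemma Series_re_im (a : nat -> C) l : is_series a l ->
  (Series (fun n => fst (a n)), Series (fun n => snd (a n))) = l.
Proof.
  intros H. destruct l as [l1 l2].
  rewrite (is_series_unique _ _ (is_series_fst a _ H)), (is_series_unique _ _ (is_series_snd a _ H)).
  reflexivity.
Qed.

Lemma Cmod_sum_n_le (a : nat -> C) n : Cmod (sum_n a n) <= sum_n (fun k => Cmod (a k)) n.
Proof. exact (norm_sum_n_m (K := C_AbsRing) (V := C_NormedModule) a 0 n). Qed.

Lemma is_lim_seq_Cmod_sum_n (a : nat -> C) l :
  is_series a l -> is_lim_seq (fun n => Cmod (sum_n a n)) (Cmod l).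
Proof.
  intros Ha. eapply filterlim_comp; [exact Ha|].
  apply (filterlim_norm (K := C_AbsRing) (V := C_NormedModule)).
Qed.

Lemma Cmod_is_series_le (a : nat -> C) l B :
  is_series a l -> (forall n, sum_n (fun k => Cmod (a k)) n <= B) -> Cmod l <= B.
Proof.
  intros Ha Hb.
  assert (H : forall n, Cmod (sum_n a n) <= B)
    by (intros n; eapply Rle_trans; [apply Cmod_sum_n_le | apply Hb]).
  exact (is_lim_seq_le _ _ _ _ H (is_lim_seq_Cmod_sum_n a l Ha) (is_lim_seq_const B)).
Qed.

Lemma Cmod_is_series_le_series (a : nat -> C) (b : nat -> R) l lb :
  is_series a l -> is_series b lb -> (forall n, Cmod (a n) <= b n) -> Cmod l <= lb.
Proof.
  intros Ha Hb Hab.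
  assert (H : forall n, Cmod (sum_n a n) <= sum_n b n).
  { intros n. eapply Rle_trans; [apply Cmod_sum_n_le | apply sum_n_m_le; intros k; apply Hab]. }
  exact (is_lim_seq_le _ _ _ _ H (is_lim_seq_Cmod_sum_n a l Ha) (Hb : is_lim_seq (sum_n b) lb)).
Qed.

Lemma is_series_geom_shift q c : Rabs q < 1 -> is_series (fun k => c * q ^ S k) (c * (q / (1 - q))).
Proof.
  intros Hq. pose proof (is_series_scal_l (c * q) _ _ (is_series_geom q Hq)) as H.
  assert (1 - q <> 0) by (apply Rabs_def2 in Hq; lra).
  replace (c * (q / (1 - q))) with (c * q * / (1 - q)) by (field; auto).
  eapply is_series_ext; [|exact H].
  intros n. simpl. change (scal (c * q) (q ^ n)) with (c * q * q ^ n). ring.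
Qed.

Definition single (c : C) (k0 k : nat) : C := if Nat.eq_dec k k0 then c else RtoC 0.

Lemma sum_n_single c k0 n : sum_n (single c k0) n = if Compare_dec.le_dec k0 n then c else RtoC 0.
Proof.
  induction n as [|n IH].
  - rewrite sum_O. unfold single.
    destruct (Nat.eq_dec 0 k0), (Compare_dec.le_dec k0 0); try reflexivity; lia.
  - rewrite sum_Sn, IH. unfold single.
    destruct (Nat.eq_dec (S n) k0), (Compare_dec.le_dec k0 n), (Compare_dec.le_dec k0 (S n)); try lia.
    + exact (plus_zero_l (G := C_AbelianMonoid) c).
    + exact (plus_zero_r (G := C_AbelianMonoid) c).
    + exact (plus_zero_r (G := C_AbelianMonoid) (RtoC 0)).
Qed.

Lemma is_series_single (c : C) k0 : is_series (V := C_NormedModule) (single c k0) c.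
Proof.
  apply (proj2 (filterlim_locally _ _)). intros eps. exists k0. intros n Hn.
  rewrite sum_n_single. destruct (Compare_dec.le_dec k0 n); [apply ball_center | lia].
Qed.

Section Lacunary.

Variable K : R.
Hypothesis HK : 1 < K.

Lemma delta_pos n : 0 < delta K n.
Proof. apply Rinv_0_lt_compat, pow_lt. lra. Qed.

Lemma delta_le_1 n : delta K n <= 1.
Proof.
  unfold delta. rewrite <- Rinv_1. apply Rinv_le_contravar; [lra|].
  rewrite <- (pow1 n). apply pow_incr. lra.
Qed.

Lemma delta_add i j : delta K (i + j) = delta K i * delta K j.
Proof.
  unfold delta. rewrite pow_add.
  pose proof (pow_lt K i ltac:(lra)). pose proof (pow_lt K j ltac:(lra)). field. lra.
Qed.

Lemma Rpower_delta n c : Rpower (delta K n) c = Rpower (/ K) c ^ n.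
Proof.
  unfold delta. rewrite <- pow_inv.
  assert (0 < / K) by (apply Rinv_0_lt_compat; lra).
  rewrite <- (Rpower_pow n (/ K)), !Rpower_mult by auto.
  rewrite <- Rpower_pow by apply Rpower_pos. rewrite Rpower_mult. f_equal. ring.
Qed.

End Lacunary.

Lemma bounded_seq_bound (a : nat -> C) : bounded_seq a -> exists M, 0 <= M /\ forall n, Cmod (a n) <= M.
Proof.
  intros [M HM]. exists M. split; [eapply Rle_trans; [apply Cmod_ge_0 | apply (HM 0%nat)] | exact HM].
Qed.

Lemma ex_derive_of_quadratic_remainder (f : C -> C) (z D : C) r B : 0 < r -> 0 <= B ->
  (forall h, Cmod h <= r -> Cmod (Cminus (Cminus (f (Cplus z h)) (f z)) (Cmult h D)) <= B * Cmod h ^ 2) ->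
  @ex_derive C_AbsRing C_NormedModule f z.
Proof.
  intros Hr HB Hf. exists D. split; [apply is_linear_scal_l|].
  intros x Hx.
  pose proof (@is_filter_lim_locally_unique C_AbsRing (AbsRing_NormedModule C_AbsRing) z x Hx) as Ex.
  subst x. intros eps.
  pose proof (cond_pos eps) as He.
  assert (Hm : 0 < Rmin r (eps / (B + 1))) by (apply Rmin_glb_lt; [lra | apply Rdiv_lt_0_compat; lra]).
  exists (mkposreal _ Hm). intros y Hy.
  pose proof (Rmin_l r (eps / (B + 1))). pose proof (Rmin_r r (eps / (B + 1))).
  change (Cmod (Cminus y z) < Rmin r (eps / (B + 1))) in Hy.
  change (Cmod (Cminus (Cminus (f y) (f z)) (Cmult (Cminus y z) D)) <= eps * Cmod (Cminus y z)).
  set (h := Cminus y z) in *.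
  replace y with (Cplus z h) by (unfold h; ring).
  eapply Rle_trans; [apply Hf; lra|].
  pose proof (Cmod_ge_0 h).
  assert (B * Cmod h <= eps).
  { apply (Rle_trans _ (B * (eps / (B + 1)))); [apply Rmult_le_compat_l; lra|].
    replace (B * (eps / (B + 1))) with (eps - eps / (B + 1)) by (field; lra).
    pose proof (Rdiv_lt_0_compat eps (B + 1) He ltac:(lra)). lra. }
  replace (B * Cmod h ^ 2) with ((B * Cmod h) * Cmod h) by ring.
  apply Rmult_le_compat_r; lra.
Qed.

Definition term_deriv (K nu beta : R) (a : nat -> C) (z : C) (k : nat) : C :=
  Copp (Cmult (a k) (Cmult (RtoC (Rpower (delta K (S k)) nu))
          (Cmult (RtoC beta) (Defs.Cpow (Cminus (RtoC (1 + delta K (S k))) z) (beta - 1))))).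

Section LacunarySeries.

Variables (K nu beta : R).
Hypotheses (HK : 1 < K) (Hnu : 0 < nu) (Hbeta : beta <= 0).

Let q := Rpower (/ K) nu.
Let Hq : 0 < q < 1 := Rpower_inv_lt_1 K nu HK Hnu.

Lemma Cmod_fn n (z : C) : Cmod z < 1 + delta K n ->
  Cmod (fn K nu beta n z) = Rpower (delta K n) nu * Rpower (Cmod (Cminus (RtoC (1 + delta K n)) z)) beta.
Proof.
  intros Hz. unfold fn. rewrite Cmod_mult, Cmod_R, Rabs_right by (left; apply Rpower_pos).
  f_equal. apply Cmod_Cpow. intros E.
  pose proof (fst_sub_ge (1 + delta K n) z). rewrite E in H. simpl in H. lra.
Qed.

Lemma Cmod_fn_le n (z : C) L : 0 < L ->
  L <= Cmod (Cminus (RtoC (1 + delta K n)) z) -> Cmod z < 1 + delta K n ->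
  Cmod (fn K nu beta n z) <= Rpower (delta K n) nu * Rpower L beta.
Proof.
  intros HL HLw Hz. rewrite Cmod_fn by auto.
  apply Rmult_le_compat_l; [left; apply Rpower_pos | apply Rpower_le_nonpos; auto].
Qed.

Lemma Cmod_term_le a M (z : C) : (forall n, Cmod (a n) <= M) -> Cmod z < 1 -> forall k,
  Cmod (term K nu beta a z k) <= (M * Rpower (1 - Cmod z) beta) * q ^ S k.
Proof.
  intros HM Hz k. unfold term. rewrite Cmod_mult.
  pose proof (delta_pos K HK (S k)).
  assert (Hf : Cmod (fn K nu beta (S k) z) <= Rpower (delta K (S k)) nu * Rpower (1 - Cmod z) beta).
  { apply Cmod_fn_le; [lra | | lra].
    pose proof (fst_sub_ge (1 + delta K (S k)) z). pose proof (fst_le_Cmod (Cminus (RtoC (1 + delta K (S k))) z)).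
    lra. }
  rewrite Rpower_delta in Hf by lra. fold q in Hf.
  replace (M * Rpower (1 - Cmod z) beta * q ^ S k) with (M * (q ^ S k * Rpower (1 - Cmod z) beta)) by ring.
  apply Rmult_le_compat; auto using Cmod_ge_0.
Qed.

Lemma is_series_term a (z : C) : bounded_seq a -> Cmod z < 1 ->
  is_series (term K nu beta a z) (Phi K nu beta a z).
Proof.
  intros Ha Hz. destruct (bounded_seq_bound a Ha) as [M [HM0 HM]].
  assert (Hex : ex_series (V := C_CompleteNormedModule) (term K nu beta a z)).
  { apply (ex_series_le (K := C_AbsRing) (V := C_CompleteNormedModule) _ _ (Cmod_term_le a M z HM Hz)).
    eexists. apply is_series_geom_shift. rewrite Rabs_right; lra. }
  destruct Hex as [l Hl]. unfold Phi. rewrite (Series_re_im _ _ Hl). exact Hl.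
Qed.

Lemma shifted_point_re_ge (z : C) k : 1 - Cmod z <= fst (Cminus (RtoC (1 + delta K (S k))) z).
Proof. pose proof (fst_sub_ge (1 + delta K (S k)) z). pose proof (delta_pos K HK (S k)). lra. Qed.

Lemma shifted_point_neq_0 (z : C) k : Cmod z < 1 -> Cminus (RtoC (1 + delta K (S k))) z <> 0.
Proof. intros Hz E. pose proof (shifted_point_re_ge z k). rewrite E in H. simpl in H. lra. Qed.

Lemma Cmod_term_deriv_le a M (z : C) : 0 <= M -> (forall n, Cmod (a n) <= M) -> Cmod z < 1 ->
  forall k, Cmod (term_deriv K nu beta a z k) <= (M * Rabs beta * Rpower (1 - Cmod z) (beta - 1)) * q ^ S k.
Proof.
  intros HM0 HM Hz k. unfold term_deriv.
  rewrite Cmod_opp, !Cmod_mult, !Cmod_R, Cmod_Cpow by (apply shifted_point_neq_0; auto).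
  rewrite (Rabs_right (Rpower _ nu)) by (left; apply Rpower_pos).
  rewrite Rpower_delta by lra. fold q.
  assert (Rpower (Cmod (Cminus (RtoC (1 + delta K (S k))) z)) (beta - 1) <= Rpower (1 - Cmod z) (beta - 1)).
  { apply Rpower_le_nonpos; [lra| |lra].
    eapply Rle_trans; [apply shifted_point_re_ge | apply fst_le_Cmod]. }
  pose proof (HM k). pose proof (Cmod_ge_0 (a k)). pose proof (Rabs_pos beta).
  pose proof (pow_le q (S k) (Rlt_le _ _ (proj1 Hq))).
  pose proof (Rpower_pos (Cmod (Cminus (RtoC (1 + delta K (S k))) z)) (beta - 1)).
  replace (M * Rabs beta * Rpower (1 - Cmod z) (beta - 1) * q ^ S k)
    with (M * (q ^ S k * (Rabs beta * Rpower (1 - Cmod z) (beta - 1)))) by ring.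
  apply Rmult_le_compat; try apply Rmult_le_pos; try apply Rmult_le_compat_l; nra.
Qed.

Lemma term_taylor a M (z h : C) k :
  0 <= M -> (forall n, Cmod (a n) <= M) -> Cmod z < 1 -> Cmod h <= (1 - Cmod z) / 2 ->
  Cmod (Cminus (Cminus (term K nu beta a (Cplus z h) k) (term K nu beta a z k))
               (Cmult h (term_deriv K nu beta a z k)))
  <= M * (4 * Rabs (beta * (beta - 1)) * Rpower ((1 - Cmod z) / 2) (beta - 1 - 1)) * Cmod h ^ 2 * q ^ S k.
Proof.
  intros HM0 HM Hz Hh.
  set (w := Cminus (RtoC (1 + delta K (S k))) z).
  set (c := Rpower (delta K (S k)) nu).
  set (CT := 4 * Rabs (beta * (beta - 1)) * Rpower ((1 - Cmod z) / 2) (beta - 1 - 1)).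
  pose proof (Cpow_taylor beta (1 - Cmod z) w (Copp h) Hbeta ltac:(lra)
                (shifted_point_re_ge z k) ltac:(rewrite Cmod_opp; exact Hh)) as HT.
  fold CT in HT. rewrite Cmod_opp in HT.
  assert (Ew : Cminus (RtoC (1 + delta K (S k))) (Cplus z h) = Cplus w (Copp h)) by (unfold w; ring).
  unfold term, term_deriv, fn. rewrite Ew. fold w c.
  match goal with |- Cmod ?e <= _ =>
    replace e with (Cmult (a k) (Cmult (RtoC c)
      (Cminus (Cminus (Defs.Cpow (Cplus w (Copp h)) beta) (Defs.Cpow w beta))
              (Cmult (Cmult (RtoC beta) (Defs.Cpow w (beta - 1))) (Copp h))))) by ring
  end.
  rewrite !Cmod_mult, Cmod_R, Rabs_right by (left; apply Rpower_pos).
  unfold c. rewrite Rpower_delta by lra. fold q.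
  pose proof (HM k). pose proof (Cmod_ge_0 (a k)).
  pose proof (pow_le q (S k) (Rlt_le _ _ (proj1 Hq))).
  replace (M * CT * Cmod h ^ 2 * q ^ S k) with (M * (q ^ S k * (CT * Cmod h ^ 2))) by ring.
  apply Rmult_le_compat; auto; [apply Rmult_le_pos; auto using Cmod_ge_0 | apply Rmult_le_compat_l; auto].
Qed.

Lemma Phi_taylor a M (z : C) : 0 <= M -> (forall n, Cmod (a n) <= M) -> Cmod z < 1 ->
  exists D : C, forall h : C, Cmod h <= (1 - Cmod z) / 2 ->
    Cmod (Cminus (Cminus (Phi K nu beta a (Cplus z h)) (Phi K nu beta a z)) (Cmult h D))
    <= M * (4 * Rabs (beta * (beta - 1)) * Rpower ((1 - Cmod z) / 2) (beta - 1 - 1)) * (q / (1 - q)) * Cmod h ^ 2.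
Proof.
  intros HM0 HM Hz.
  assert (Ha : bounded_seq a) by (exists M; exact HM).
  assert (Hex : ex_series (V := C_CompleteNormedModule) (term_deriv K nu beta a z)).
  { apply (ex_series_le (K := C_AbsRing) (V := C_CompleteNormedModule) _ _ (Cmod_term_deriv_le a M z HM0 HM Hz)).
    eexists. apply is_series_geom_shift. rewrite Rabs_right; lra. }
  destruct Hex as [D HD]. exists D. intros h Hh.
  assert (Hzh : Cmod (Cplus z h) < 1) by (pose proof (Cmod_triangle z h); lra).
  pose proof (is_series_minus _ _ _ _
     (is_series_minus _ _ _ _ (is_series_term a _ Ha Hzh)
                              (is_series_term a _ Ha Hz))
     (is_series_scal_l (K := C_AbsRing) (V := C_NormedModule) h _ _ HD)) as Hrem.
  set (CT := 4 * Rabs (beta * (beta - 1)) * Rpower ((1 - Cmod z) / 2) (beta - 1 - 1)).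
  replace (M * CT * (q / (1 - q)) * Cmod h ^ 2) with (M * CT * Cmod h ^ 2 * (q / (1 - q))) by ring.
  apply (Cmod_is_series_le_series _ _ _ _ Hrem (is_series_geom_shift q _ ltac:(rewrite Rabs_right; lra))).
  intros k. exact (term_taylor a M z h k HM0 HM Hz Hh).
Qed.

Lemma Phi_analytic a : bounded_seq a -> analytic_on_disk (Phi K nu beta a).
Proof.
  intros Ha z Hz. unfold in_disk in Hz.
  destruct (bounded_seq_bound a Ha) as [M [HM0 HM]].
  destruct (Phi_taylor a M z HM0 HM Hz) as [D HD].
  eapply (ex_derive_of_quadratic_remainder _ z D ((1 - Cmod z) / 2)); [lra | | exact HD].
  apply Rmult_le_pos; [|apply Rdiv_le_0_compat; lra].
  apply Rmult_le_pos; [lra|].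
  apply Rmult_le_pos; [apply Rmult_le_pos; [lra | apply Rabs_pos] | left; apply Rpower_pos].
Qed.

End LacunarySeries.

Lemma Phi_linear K nu beta (a b : nat -> C) (l m : C) (z : C) : 1 < K -> 0 < nu -> beta <= 0 ->
  bounded_seq a -> bounded_seq b -> in_disk z ->
  Phi K nu beta (fun n => Cplus (Cmult l (a n)) (Cmult m (b n))) z
  = Cplus (Cmult l (Phi K nu beta a z)) (Cmult m (Phi K nu beta b z)).
Proof.
  intros HK Hnu Hb Ha Hbb Hz.
  pose proof (is_series_plus _ _ _ _
    (is_series_scal_l (K := C_AbsRing) (V := C_NormedModule) l _ _ (is_series_term K nu beta HK Hnu Hb a z Ha Hz))
    (is_series_scal_l (K := C_AbsRing) (V := C_NormedModule) m _ _ (is_series_term K nu beta HK Hnu Hb b z Hbb Hz)))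
    as H.
  unfold Phi at 1. apply Series_re_im. eapply is_series_ext; [|exact H].
  intros n. unfold term.
  change (plus (scal l (Cmult (a n) (fn K nu beta (S n) z))) (scal m (Cmult (b n) (fn K nu beta (S n) z))))
    with (Cplus (Cmult l (Cmult (a n) (fn K nu beta (S n) z))) (Cmult m (Cmult (b n) (fn K nu beta (S n) z)))).
  match goal with |- ?x = ?y => change (@eq C x y) end. ring.
Qed.

Lemma bounded_seq_lin_comb (a b : nat -> C) (l m : C) : bounded_seq a -> bounded_seq b ->
  bounded_seq (fun n => Cplus (Cmult l (a n)) (Cmult m (b n))).
Proof.
  intros [Ma HMa] [Mb HMb]. exists (Cmod l * Ma + Cmod m * Mb). intros n.
  eapply Rle_trans; [apply Cmod_triangle|]. rewrite !Cmod_mult.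
  pose proof (HMa n). pose proof (HMb n).
  apply Rplus_le_compat; apply Rmult_le_compat_l; auto using Cmod_ge_0.
Qed.

(** * Integral means *)

Lemma rpow_continuous_nonneg p x : 0 < p -> 0 <= x -> forall eps : posreal, exists d : posreal,
  forall y, 0 <= y -> Rabs (y - x) < d -> Rabs (rpow y p - rpow x p) < eps.
Proof.
  intros Hp Hx eps. destruct (Req_dec x 0) as [E|E].
  - subst x. pose proof (Rpower_pos eps (1 / p)) as He.
    exists (mkposreal _ He). intros y Hy Hyx. simpl in Hyx.
    rewrite rpow_0_l, !Rminus_0_r in *. rewrite Rabs_right in Hyx by lra.
    destruct (Req_dec y 0); [subst; rewrite rpow_0_l, Rabs_R0; apply cond_pos|].
    rewrite rpow_of_pos, Rabs_right by (try left; try apply Rpower_pos; lra).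
    replace (pos eps) with (Rpower (Rpower eps (1 / p)) p).
    + apply Rlt_Rpower_l; lra.
    + rewrite Rpower_mult. replace (1 / p * p) with 1 by (field; lra). apply Rpower_1, cond_pos.
  - assert (Hc : continuity_pt (fun y => Rpower y p) x).
    { apply derivable_continuous_pt. exists (p * Rpower x (p - 1)). apply derivable_pt_lim_power. lra. }
    destruct (Hc eps (cond_pos eps)) as [d [Hd Hd2]].
    assert (Hm : 0 < Rmin d (x / 2)) by (apply Rmin_glb_lt; lra).
    exists (mkposreal _ Hm). intros y Hy Hyx. simpl in Hyx.
    pose proof (Rmin_l d (x / 2)). pose proof (Rmin_r d (x / 2)).
    assert (0 < y) by (apply Rabs_def2 in Hyx; lra).
    rewrite !rpow_of_pos by lra.
    destruct (Req_dec y x); [subst; rewrite Rminus_diag, Rabs_R0; apply cond_pos|].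
    apply (Hd2 y). split; [split; [exact I | auto] | simpl; unfold R_dist; lra].
Qed.

Lemma continuous_rpow_comp (g : R -> R) p t : 0 < p -> (forall s, 0 <= g s) ->
  continuous g t -> continuous (fun s => rpow (g s) p) t.
Proof.
  intros Hp Hg Hc. apply (proj2 (filterlim_locally _ _)). intros eps.
  destruct (rpow_continuous_nonneg p (g t) Hp (Hg t) eps) as [d Hd].
  generalize (proj1 (filterlim_locally _ _) Hc d). apply filter_imp.
  intros s Hs. apply Hd; [apply Hg | exact Hs].
Qed.

Lemma continuous_circle (r t : R) : filterlim (fun t => Cmult (RtoC r) (cis t)) (locally t)
  (@locally (AbsRing_UniformSpace C_AbsRing) (Cmult (RtoC r) (cis t))).
Proof.
  apply (proj2 (@filterlim_locally R (AbsRing_UniformSpace C_AbsRing) _ _ _ _)). intros eps.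
  assert (Hc1 : continuity_pt (fun t => r * cos t) t)
    by (apply continuity_pt_mult; [apply continuity_pt_const; intros ??; reflexivity | apply continuity_cos]).
  assert (Hc2 : continuity_pt (fun t => r * sin t) t)
    by (apply continuity_pt_mult; [apply continuity_pt_const; intros ??; reflexivity | apply continuity_sin]).
  apply continuity_pt_filterlim in Hc1. apply continuity_pt_filterlim in Hc2.
  assert (He : 0 < eps / 2) by (pose proof (cond_pos eps); lra).
  generalize (filter_and _ _ (proj1 (filterlim_locally _ _) Hc1 (mkposreal _ He))
                             (proj1 (filterlim_locally _ _) Hc2 (mkposreal _ He))).
  apply filter_imp. intros s [Hs1 Hs2].
  change (Rabs (r * cos s - r * cos t) < eps / 2) in Hs1.
  change (Rabs (r * sin s - r * sin t) < eps / 2) in Hs2.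
  change (Cmod (Cminus (Cmult (RtoC r) (cis s)) (Cmult (RtoC r) (cis t))) < eps).
  eapply Rle_lt_trans; [apply Cmod_le_Rabs_re_im|].
  unfold cis. cbn [fst snd Cminus Cplus Copp Cmult RtoC].
  replace (r * cos s - 0 * sin s + - (r * cos t - 0 * sin t)) with (r * cos s - r * cos t) by ring.
  replace (r * sin s + 0 * cos s + - (r * sin t + 0 * cos t)) with (r * sin s - r * sin t) by ring.
  lra.
Qed.

Definition circle_integrand (p r : R) (f : C -> C) (t : R) : R :=
  rpow (Cmod (f (Cmult (RtoC r) (cis t)))) p.

Lemma circle_integrand_continuous (f : C -> C) p r t : analytic_on_disk f -> 0 <= r < 1 -> 0 < p ->
  continuous (circle_integrand p r f) t.
Proof.
  intros Hf Hr Hp. apply continuous_rpow_comp; auto; [intros; apply Cmod_ge_0|].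
  assert (Hd : in_disk (Cmult (RtoC r) (cis t))) by (unfold in_disk; rewrite Cmod_circle; lra).
  apply (filterlim_comp _ _ _ (fun s => f (Cmult (RtoC r) (cis s))) (fun v : C_NormedModule => norm v)
           _ (locally (f (Cmult (RtoC r) (cis t))))).
  - apply (filterlim_comp _ _ _ (fun s => Cmult (RtoC r) (cis s)) f _
             (@locally (AbsRing_UniformSpace C_AbsRing) (Cmult (RtoC r) (cis t)))).
    + apply continuous_circle.
    + exact (ex_derive_continuous f _ (Hf _ Hd)).
  - apply (filterlim_norm (K := C_AbsRing) (V := C_NormedModule)).
Qed.

Lemma ex_RInt_circle_integrand (f : C -> C) p r a b : analytic_on_disk f -> 0 <= r < 1 -> 0 < p ->
  ex_RInt (circle_integrand p r f) a b.
Proof.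
  intros Hf Hr Hp. apply (ex_RInt_continuous (V := R_CompleteNormedModule)).
  intros t _. apply circle_integrand_continuous; auto.
Qed.

Lemma is_RInt_Rpower_shift s e : 0 < s -> e + 1 <> 0 ->
  is_RInt (fun t => Rpower (s + t) e) 0 PI ((Rpower (s + PI) (e + 1) - Rpower s (e + 1)) / (e + 1)).
Proof.
  intros Hs He. pose proof PI_RGT_0.
  replace ((Rpower (s + PI) (e + 1) - Rpower s (e + 1)) / (e + 1)) with
    (minus ((fun t => Rpower (s + t) (e + 1) / (e + 1)) PI) ((fun t => Rpower (s + t) (e + 1) / (e + 1)) 0))
    by (cbn; rewrite Rplus_0_r; unfold minus, plus, opp; simpl; field; auto).
  apply (is_RInt_derive (fun t => Rpower (s + t) (e + 1) / (e + 1))).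
  - intros x Hx. rewrite Rmin_left, Rmax_right in Hx by lra.
    unfold Rpower. auto_derive; [lra|].
    replace ((e + 1) * ln (s + x)) with (e * ln (s + x) + ln (s + x)) by ring.
    rewrite exp_plus, exp_ln by lra. field. split; auto; lra.
  - intros x Hx. rewrite Rmin_left, Rmax_right in Hx by lra.
    apply (ex_derive_continuous (K := R_AbsRing) (V := R_NormedModule)). unfold Rpower. auto_derive. lra.
Qed.

Lemma is_RInt_Rpower_shift_reflected s e : 0 < s -> e + 1 <> 0 ->
  is_RInt (fun t => Rpower (s + (2 * PI - t)) e) PI (2 * PI)
    ((Rpower (s + PI) (e + 1) - Rpower s (e + 1)) / (e + 1)).
Proof.
  intros Hs He.
  pose proof (is_RInt_swap _ _ _ _ (is_RInt_Rpower_shift s e Hs He)) as H.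
  replace PI with (-1 * PI + 2 * PI) in H at 1 by ring.
  replace 0 with (-1 * (2 * PI) + 2 * PI) in H at 1 by ring.
  pose proof (is_RInt_opp _ _ _ _ (is_RInt_comp_lin _ (-1) (2 * PI) PI (2 * PI) _ H)) as H'.
  rewrite opp_opp in H'. eapply is_RInt_ext; [|exact H'].
  intros t _. unfold opp, scal; simpl. unfold mult; simpl. f_equal. ring_simplify. f_equal. ring.
Qed.

Lemma Rpower_shift_integral_le s e : 0 < s -> e + 1 < 0 ->
  (Rpower (s + PI) (e + 1) - Rpower s (e + 1)) / (e + 1) <= Rpower s (e + 1) / (- (e + 1)).
Proof.
  intros Hs He. pose proof (Rpower_pos (s + PI) (e + 1)).
  apply (Rmult_le_reg_r (- (e + 1))); [lra|].
  unfold Rdiv. rewrite !Rmult_assoc, Rinv_l by lra.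
  replace (/ (e + 1) * - (e + 1)) with (-1) by (field; lra). lra.
Qed.

Section CircleMeans.

Variables (p r : R) (f : C -> C).
Hypotheses (Hp : 0 < p) (Hr : 0 <= r < 1) (Hf : analytic_on_disk f).

Lemma RInt_circle_integrand_le A g : 0 <= A -> g * p + 1 < 0 ->
  (forall t, 0 < t < PI -> Cmod (f (Cmult (RtoC r) (cis t))) <= A * Rpower ((1 - r) + t) g) ->
  (forall t, PI < t < 2 * PI -> Cmod (f (Cmult (RtoC r) (cis t))) <= A * Rpower ((1 - r) + (2 * PI - t)) g) ->
  RInt (circle_integrand p r f) 0 (2 * PI)
  <= 2 * (rpow A p * (Rpower (1 - r) (g * p + 1) / (- (g * p + 1)))).
Proof.
  intros HA Hg H1 H2. pose proof PI_RGT_0.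
  set (s := 1 - r). set (e := g * p). assert (Hs : 0 < s) by (unfold s; lra).
  assert (He : e + 1 <> 0) by (unfold e; lra).
  assert (Hpt : forall t x, 0 < x -> Cmod (f (Cmult (RtoC r) (cis t))) <= A * Rpower x g ->
                  circle_integrand p r f t <= rpow A p * Rpower x e).
  { intros t x Hx Hfx. unfold circle_integrand.
    eapply Rle_trans; [apply rpow_le_compat; [apply Cmod_ge_0 | exact Hfx | lra]|].
    rewrite rpow_mult_distr, rpow_Rpower by (auto; left; apply Rpower_pos). apply Rle_refl. }
  set (I := (Rpower (s + PI) (e + 1) - Rpower s (e + 1)) / (e + 1)).
  assert (I1 : RInt (circle_integrand p r f) 0 PI <= rpow A p * I).
  { pose proof (is_RInt_scal _ _ _ (rpow A p) _ (is_RInt_Rpower_shift s e Hs He)) as HI.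
    replace (rpow A p * I) with (RInt (fun t => rpow A p * Rpower (s + t) e) 0 PI)
      by (apply is_RInt_unique; exact HI).
    apply RInt_le; [lra | apply ex_RInt_circle_integrand; auto | eexists; exact HI |].
    intros t Ht. apply Hpt; [lra | apply H1; exact Ht]. }
  assert (I2 : RInt (circle_integrand p r f) PI (2 * PI) <= rpow A p * I).
  { pose proof (is_RInt_scal _ _ _ (rpow A p) _ (is_RInt_Rpower_shift_reflected s e Hs He)) as HI.
    replace (rpow A p * I) with (RInt (fun t => rpow A p * Rpower (s + (2 * PI - t)) e) PI (2 * PI))
      by (apply is_RInt_unique; exact HI).
    apply RInt_le; [lra | apply ex_RInt_circle_integrand; auto | eexists; exact HI |].
    intros t Ht. apply Hpt; [lra | apply H2; exact Ht]. }
  rewrite <- (RInt_Chasles _ 0 PI (2 * PI)) by (apply ex_RInt_circle_integrand; auto).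
  pose proof (rpow_nonneg A p).
  assert (rpow A p * I <= rpow A p * (Rpower s (e + 1) / (- (e + 1))))
    by (apply Rmult_le_compat_l; auto; apply Rpower_shift_integral_le; auto).
  change (plus ?x ?y) with (x + y). lra.
Qed.

Lemma Mp_upper A g : 0 <= A -> g * p + 1 < 0 ->
  (forall t, 0 < t < PI -> Cmod (f (Cmult (RtoC r) (cis t))) <= A * Rpower ((1 - r) + t) g) ->
  (forall t, PI < t < 2 * PI -> Cmod (f (Cmult (RtoC r) (cis t))) <= A * Rpower ((1 - r) + (2 * PI - t)) g) ->
  Mp p r f <= A * Rpower (1 - r) (g + 1 / p) * Rpower (/ (PI * (- (g * p + 1)))) (1 / p).
Proof.
  intros HA Hg H1 H2. pose proof PI_RGT_0.
  pose proof (RInt_circle_integrand_le A g HA Hg H1 H2) as HI.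
  assert (Hnn : 0 <= RInt (circle_integrand p r f) 0 (2 * PI) / (2 * PI)).
  { apply Rdiv_le_0_compat; [|lra]. apply RInt_ge_0; [lra | apply ex_RInt_circle_integrand; auto|].
    intros; apply rpow_nonneg. }
  assert (Hmean : RInt (circle_integrand p r f) 0 (2 * PI) / (2 * PI)
                  <= rpow A p * Rpower (1 - r) (g * p + 1) * / (PI * (- (g * p + 1)))).
  { replace (rpow A p * Rpower (1 - r) (g * p + 1) * / (PI * (- (g * p + 1))))
      with (2 * (rpow A p * (Rpower (1 - r) (g * p + 1) / (- (g * p + 1)))) * / (2 * PI)) by (field; lra).
    apply Rmult_le_compat_r; [left; apply Rinv_0_lt_compat; lra | exact HI]. }
  unfold Mp. fold (circle_integrand p r f).
  eapply Rle_trans; [apply rpow_le_compat; [exact Hnn | exact Hmean | apply Rdiv_lt_0_compat; lra]|].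
  assert (0 < / (PI * - (g * p + 1))) by (apply Rinv_0_lt_compat; nra).
  rewrite !rpow_mult_distr by (try apply Rmult_le_pos; try apply rpow_nonneg; left; try apply Rpower_pos; lra).
  rewrite rpow_rpow_inv, rpow_Rpower, (rpow_of_pos (/ _)) by lra.
  replace ((g * p + 1) * (1 / p)) with (g + 1 / p) by (field; lra). lra.
Qed.

Lemma Mp_lower t0 L : 0 < t0 <= 2 * PI -> 0 <= L ->
  (forall t, 0 < t < t0 -> L <= Cmod (f (Cmult (RtoC r) (cis t)))) ->
  Rpower (t0 / (2 * PI)) (1 / p) * L <= Mp p r f.
Proof.
  intros Ht0 HL H. pose proof PI_RGT_0.
  assert (I1 : t0 * rpow L p <= RInt (circle_integrand p r f) 0 t0).
  { replace (t0 * rpow L p) with (RInt (fun _ => rpow L p) 0 t0)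
      by (rewrite RInt_const; change (scal ?a ?b) with (a * b); rewrite Rminus_0_r; reflexivity).
    apply RInt_le; [lra | apply (ex_RInt_const (V := R_NormedModule)) | apply ex_RInt_circle_integrand; auto |].
    intros t Ht. apply rpow_le_compat; auto. }
  assert (I2 : 0 <= RInt (circle_integrand p r f) t0 (2 * PI)).
  { apply RInt_ge_0; [lra | apply ex_RInt_circle_integrand; auto | intros; apply rpow_nonneg]. }
  assert (Hmean : t0 / (2 * PI) * rpow L p <= RInt (circle_integrand p r f) 0 (2 * PI) / (2 * PI)).
  { rewrite <- (RInt_Chasles _ 0 t0 (2 * PI)) by (apply ex_RInt_circle_integrand; auto).
    change (plus ?x ?y) with (x + y).
    unfold Rdiv. rewrite (Rmult_comm t0), Rmult_assoc, (Rmult_comm (/ (2 * PI))).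
    apply Rmult_le_compat_r; [left; apply Rinv_0_lt_compat|]; lra. }
  unfold Mp. fold (circle_integrand p r f).
  eapply Rle_trans; [|apply rpow_le_compat; [| exact Hmean | apply Rdiv_lt_0_compat; lra]].
  - rewrite rpow_mult_distr by (try apply Rdiv_le_0_compat; try apply rpow_nonneg; lra).
    rewrite rpow_rpow_inv, rpow_of_pos by (try apply Rdiv_lt_0_compat; lra). lra.
  - apply Rmult_le_pos; [apply Rdiv_le_0_compat; lra | apply rpow_nonneg].
Qed.

End CircleMeans.

Lemma Mp_zero p r (f : C -> C) : 0 <= r < 1 -> (forall z, in_disk z -> f z = RtoC 0) -> Mp p r f = 0.
Proof.
  intros Hr Hf. unfold Mp.
  rewrite (RInt_ext _ (fun _ => 0)).
  - rewrite RInt_const. change (scal ?a ?b) with (a * b). rewrite Rmult_0_r, Rdiv_0_l. apply rpow_0_l.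
  - intros x _. rewrite Hf, Cmod_0; [apply rpow_0_l|]. unfold in_disk. rewrite Cmod_circle; lra.
Qed.

(** * Distance from the circle of radius r to the pole 1 + delta *)

Lemma sin_small_bounds t : 0 <= t <= 2 -> t / 4 <= sin t <= t.
Proof.
  intros Ht. pose proof PI2_3_2.
  destruct (sin_bound t 0 ltac:(lra) ltac:(lra)) as [Hlo Hup].
  unfold sin_approx, sin_term in Hlo, Hup. cbn [sum_f_R0 Nat.mul Nat.add] in Hlo, Hup.
  rewrite !fact_simpl, !mult_INR in Hlo, Hup. cbn [INR Factorial.fact pow] in Hlo, Hup.
  replace (INR (5 * (4 * (3 * (2 * (1 * 1)))))) with 120 in Hup by (rewrite INR_IZR_INZ; reflexivity).
  assert (0 <= t * t * t <= 4 * t) by (split; [apply Rmult_le_pos; nra | nra]).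
  assert ((t * t) * (t * t * t) <= 20 * (t * t * t)) by (apply Rmult_le_compat_r; nra).
  split; lra.
Qed.

Lemma cos_small_lb t : 0 <= t <= 1 -> 1 - t ^ 2 / 2 <= cos t.
Proof.
  intros Ht. pose proof PI2_3_2.
  destruct (cos_bound t 0 ltac:(lra) ltac:(lra)) as [Hc _].
  unfold cos_approx, cos_term in Hc. cbn [sum_f_R0 Nat.mul Nat.add] in Hc.
  rewrite !fact_simpl, !mult_INR in Hc. cbn [INR Factorial.fact pow] in Hc. lra.
Qed.

Definition shifted_circle (d r t : R) : C := Cminus (RtoC (1 + d)) (Cmult (RtoC r) (cis t)).

Lemma shifted_circle_fst d r t : fst (shifted_circle d r t) = 1 + d - r * cos t.
Proof. unfold shifted_circle, cis. cbn. ring. Qed.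

Lemma shifted_circle_snd d r t : snd (shifted_circle d r t) = - (r * sin t).
Proof. unfold shifted_circle, cis. cbn. ring. Qed.

Lemma Cmod_shifted_circle_ge d r t : 0 < d <= 1 -> 0 <= r < 1 -> 0 <= t <= PI ->
  (d + (1 - r) + t) / 16 <= Cmod (shifted_circle d r t).
Proof.
  intros Hd Hr Ht. pose proof PI_4. pose proof PI2_3_2.
  pose proof (fst_le_Cmod (shifted_circle d r t)) as Hf.
  pose proof (Rabs_snd_le_Cmod (shifted_circle d r t)) as Hs.
  rewrite shifted_circle_fst in Hf. rewrite shifted_circle_snd, Rabs_Ropp in Hs.
  pose proof (COS_bound t).
  destruct (Rle_dec (PI / 2) t) as [Ht2|Ht2].
  - assert (cos t <= 0) by (apply cos_le_0; lra). nra.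
  - destruct (Rlt_dec r (1 / 2)) as [Hr2|Hr2]; [nra|].
    destruct (sin_small_bounds t ltac:(lra)) as [Hsin _].
    rewrite Rabs_mult, Rabs_right, (Rabs_right (sin t)) in Hs by lra.
    assert (r * (t / 4) <= r * sin t) by (apply Rmult_le_compat_l; lra).
    nra.
Qed.

Lemma Cmod_shifted_circle_reflect d r t :
  Cmod (shifted_circle d r t) = Cmod (shifted_circle d r (2 * PI - t)).
Proof.
  unfold Cmod. rewrite !shifted_circle_fst, !shifted_circle_snd.
  rewrite cos_minus, sin_minus, cos_2PI, sin_2PI. f_equal. ring.
Qed.

Lemma Cmod_shifted_circle_le d t : 0 < d <= 1 -> 0 <= t <= d -> Cmod (shifted_circle d (1 - d) t) <= 4 * d.
Proof.
  intros Hd Ht. eapply Rle_trans; [apply Cmod_le_Rabs_re_im|].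
  rewrite shifted_circle_fst, shifted_circle_snd.
  pose proof (cos_small_lb t ltac:(lra)). pose proof (COS_bound t).
  destruct (sin_small_bounds t ltac:(lra)) as [Hs1 Hs2].
  rewrite Rabs_Ropp, Rabs_mult, !Rabs_right by nra. nra.
Qed.

(** * Sums over lacunary scales *)

Section TwoSidedGeometric.

Variables (T : nat -> R) (A A0 q1 q2 : R) (N : nat).
Hypotheses (HA : 0 <= A) (HA0 : 0 <= A0) (Hq1 : 0 <= q1 < 1) (Hq2 : 0 <= q2 < 1)
  (Hbefore : forall k, (k < N)%nat -> T k <= A * q2 ^ (N - k))
  (Hat : T N <= A0)
  (Hafter : forall k, (N < k)%nat -> T k <= A * q1 ^ (k - N)).

Lemma sum_n_before_peak m : (m < N)%nat -> sum_n T m <= A * q2 ^ (N - m) / (1 - q2).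
Proof.
  induction m as [|m IH]; intros Hm.
  - rewrite sum_O. eapply Rle_trans; [apply Hbefore; lia|].
    pose proof (pow_le q2 (N - 0) ltac:(lra)).
    unfold Rdiv. rewrite <- (Rmult_1_r (A * q2 ^ (N - 0))) at 1.
    apply Rmult_le_compat_l; [nra|]. rewrite <- Rinv_1. apply Rinv_le_contravar; lra.
  - rewrite sum_Sn. change (plus ?x ?y) with (x + y).
    specialize (IH ltac:(lia)). pose proof (Hbefore (S m) Hm).
    replace (N - m)%nat with (S (N - S m)) in IH by lia. simpl in IH.
    assert (A * q2 ^ (N - S m) / (1 - q2) = A * (q2 * q2 ^ (N - S m)) / (1 - q2) + A * q2 ^ (N - S m))
      by (field; lra).
    lra.
Qed.

Lemma sum_n_after_peak j : sum_n T (N + j) <= A * (q2 / (1 - q2)) + A0 + A * q1 * (1 - q1 ^ j) / (1 - q1).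
Proof.
  assert (Hlead : 0 <= A * (q2 / (1 - q2))) by (apply Rmult_le_pos; [|apply Rdiv_le_0_compat]; lra).
  induction j as [|j IH].
  - replace (A * q1 * (1 - q1 ^ 0) / (1 - q1)) with 0 by (simpl; field; lra). rewrite Nat.add_0_r.
    destruct (Nat.eq_dec N 0) as [E|E].
    + rewrite E, sum_O. pose proof Hat as H0. rewrite E in H0. lra.
    + replace N with (S (N - 1)) at 1 by lia. rewrite sum_Sn. change (plus ?x ?y) with (x + y).
      pose proof (sum_n_before_peak (N - 1) ltac:(lia)) as Hb.
      replace (N - (N - 1))%nat with 1%nat in Hb by lia. replace (S (N - 1)) with N by lia.
      replace (A * q2 ^ 1 / (1 - q2)) with (A * (q2 / (1 - q2))) in Hb by (field; lra). lra.
  - replace (N + S j)%nat with (S (N + j)) by lia. rewrite sum_Sn. change (plus ?x ?y) with (x + y).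
    pose proof (Hafter (S (N + j)) ltac:(lia)) as H.
    replace (S (N + j) - N)%nat with (S j) in H by lia.
    assert (A * q1 * (1 - q1 ^ S j) / (1 - q1) = A * q1 * (1 - q1 ^ j) / (1 - q1) + A * q1 ^ S j)
      by (simpl; field; lra).
    lra.
Qed.

Lemma sum_n_two_sided_geometric_le m :
  sum_n T m <= A * (q2 / (1 - q2)) + A0 + A * (q1 / (1 - q1)).
Proof.
  assert (0 <= A * (q1 / (1 - q1))) by (apply Rmult_le_pos; [|apply Rdiv_le_0_compat]; lra).
  destruct (Nat.lt_ge_cases m N) as [Hm|Hm].
  - eapply Rle_trans; [apply sum_n_before_peak; auto|].
    assert (q2 ^ (N - m) <= q2).
    { replace (N - m)%nat with (S (N - m - 1)) by lia. simpl.
      pose proof (pow_incr q2 1 (N - m - 1) ltac:(lra)) as H1. rewrite pow1 in H1. nra. }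
    assert (A * q2 ^ (N - m) / (1 - q2) <= A * (q2 / (1 - q2))).
    { unfold Rdiv. rewrite <- Rmult_assoc. apply Rmult_le_compat_r; [left; apply Rinv_0_lt_compat; lra|].
      apply Rmult_le_compat_l; auto. }
    lra.
  - replace m with (N + (m - N))%nat by lia. eapply Rle_trans; [apply sum_n_after_peak|].
    assert (A * q1 * (1 - q1 ^ (m - N)) / (1 - q1) <= A * (q1 / (1 - q1))).
    { pose proof (pow_le q1 (m - N) ltac:(lra)).
      unfold Rdiv. replace (A * (q1 * / (1 - q1))) with (A * q1 * 1 * / (1 - q1)) by ring.
      apply Rmult_le_compat_r; [left; apply Rinv_0_lt_compat; lra|]. apply Rmult_le_compat_l; nra. }
    lra.
Qed.

End TwoSidedGeometric.

Lemma exists_least_nat (P : nat -> Prop) n : P n -> exists N, P N /\ forall k, (k < N)%nat -> ~ P k.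
Proof.
  revert n. induction n as [n IH] using (well_founded_induction Wf_nat.lt_wf). intros Hn.
  destruct (classic (exists k, (k < n)%nat /\ P k)) as [[k [Hk HPk]]|H].
  - exact (IH k Hk HPk).
  - exists n. split; auto. intros k Hk HPk. apply H. eauto.
Qed.

Definition lacunary_profile (K nu beta x : R) (k : nat) : R :=
  Rpower (delta K (S k)) nu * Rpower (delta K (S k) + x) beta.

Definition lacunary_const (K nu beta : R) : R :=
  let q1 := Rpower (/ K) nu in let q2 := Rpower (/ K) (- (nu + beta)) in
  / q2 * (q2 / (1 - q2)) + 1 + / q2 * (q1 / (1 - q1)).

Section LacunarySum.

Variables (K nu beta : R).
Hypotheses (HK : 1 < K) (Hnu : 0 < nu) (Hbeta : beta <= 0) (Hneg : nu + beta < 0).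

Let q1 := Rpower (/ K) nu.
Let q2 := Rpower (/ K) (- (nu + beta)).
Let Hq1 : 0 < q1 < 1 := Rpower_inv_lt_1 K nu HK Hnu.
Lemma q2_bounds : 0 < q2 < 1.
Proof. apply Rpower_inv_lt_1; lra. Qed.

Lemma lacunary_const_pos : 0 < lacunary_const K nu beta.
Proof.
  pose proof q2_bounds. unfold lacunary_const. fold q1 q2.
  assert (0 <= / q2 * (q2 / (1 - q2)))
    by (apply Rmult_le_pos; [left; apply Rinv_0_lt_compat | apply Rdiv_le_0_compat]; lra).
  assert (0 <= / q2 * (q1 / (1 - q1)))
    by (apply Rmult_le_pos; [left; apply Rinv_0_lt_compat | apply Rdiv_le_0_compat]; lra).
  lra.
Qed.

(* The two ways of bounding [d^nu (d + x)^beta]: by [(d + x)^beta <= x^beta] and by [<= d^beta]. *)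
Lemma Rpower_profile_le d x : 0 < d -> 0 < x ->
  Rpower d nu * Rpower (d + x) beta <= Rpower x (nu + beta) * Rpower (d / x) nu /\
  Rpower d nu * Rpower (d + x) beta <= Rpower x (nu + beta) * Rpower (d / x) (nu + beta).
Proof.
  intros Hd Hx. rewrite !Rpower_div, !Rpower_plus by auto. split.
  - replace (Rpower x nu * Rpower x beta * (Rpower d nu * Rpower x (- nu)))
      with (Rpower d nu * Rpower x beta * (Rpower x nu * Rpower x (- nu))) by ring.
    rewrite <- (Rpower_plus _ _ x), Rplus_opp_r, Rpower_O, Rmult_1_r by auto.
    apply Rmult_le_compat_l; [left; apply Rpower_pos | apply Rpower_le_nonpos; lra].
  - replace (Rpower x nu * Rpower x beta * (Rpower d nu * Rpower d beta * Rpower x (- (nu + beta))))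
      with (Rpower d nu * Rpower d beta * (Rpower x (nu + beta) * Rpower x (- (nu + beta))))
      by (rewrite Rpower_plus; ring).
    rewrite <- (Rpower_plus _ _ x), Rplus_opp_r, Rpower_O, Rmult_1_r by auto.
    apply Rmult_le_compat_l; [left; apply Rpower_pos | apply Rpower_le_nonpos; lra].
Qed.

Lemma lacunary_profile_le_before x j k : 0 < x -> x <= delta K (S j) -> (k <= j)%nat ->
  lacunary_profile K nu beta x k <= Rpower x (nu + beta) * q2 ^ (j - k).
Proof.
  intros Hx Hxj Hk. unfold lacunary_profile.
  pose proof (delta_pos K HK (S k)) as Hdk. pose proof (delta_pos K HK (j - k)).
  eapply Rle_trans; [apply (proj2 (Rpower_profile_le _ x Hdk Hx))|].
  apply Rmult_le_compat_l; [left; apply Rpower_pos|].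
  replace (delta K (S k) / x) with ((delta K (S j) / x) / delta K (j - k)).
  - rewrite Rpower_div, Rpower_delta by (auto; apply Rdiv_lt_0_compat; lra). fold q2.
    pose proof (pow_le q2 (j - k) (Rlt_le _ _ (proj1 q2_bounds))).
    assert (Rpower (delta K (S j) / x) (nu + beta) <= 1).
    { apply Rpower_le_1_nonpos; [|lra].
      apply (Rmult_le_reg_r x); [lra|]. unfold Rdiv. rewrite Rmult_assoc, Rinv_l; lra. }
    nra.
  - replace (S j) with (S k + (j - k))%nat by lia. rewrite delta_add by auto. field. lra.
Qed.

Lemma lacunary_profile_le_after x j k : 0 < x -> delta K (S j) <= x -> (j <= k)%nat ->
  lacunary_profile K nu beta x k <= Rpower x (nu + beta) * q1 ^ (k - j).
Proof.
  intros Hx Hxj Hk. unfold lacunary_profile.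
  pose proof (delta_pos K HK (S k)) as Hdk. pose proof (delta_pos K HK (S j)).
  eapply Rle_trans; [apply (proj1 (Rpower_profile_le _ x Hdk Hx))|].
  apply Rmult_le_compat_l; [left; apply Rpower_pos|].
  replace (delta K (S k) / x) with ((delta K (S j) / x) * delta K (k - j)).
  - rewrite <- Rpower_mult_distr, Rpower_delta by (auto; try apply Rdiv_lt_0_compat; try apply delta_pos; lra).
    fold q1. pose proof (pow_le q1 (k - j) (Rlt_le _ _ (proj1 Hq1))).
    assert (Rpower (delta K (S j) / x) nu <= 1).
    { apply Rpower_le_1_nonneg; [split; [apply Rdiv_lt_0_compat; lra|] | lra].
      apply (Rmult_le_reg_r x); [lra|]. unfold Rdiv. rewrite Rmult_assoc, Rinv_l; lra. }
    pose proof (Rpower_pos (delta K (S j) / x) nu). nra.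
  - replace (S k) with (S j + (k - j))%nat by lia. rewrite delta_add by auto. field. lra.
Qed.

Lemma exists_delta_le x : 0 < x -> exists n, delta K (S n) <= x.
Proof.
  intros Hx. destruct (Pow_x_infinity K ltac:(rewrite Rabs_right; lra) (/ x)) as [n Hn].
  exists n. specialize (Hn (S n) ltac:(lia)). rewrite Rabs_right in Hn by (left; apply pow_lt; lra).
  unfold delta. rewrite <- (Rinv_inv x). apply Rinv_le_contravar; [apply Rinv_0_lt_compat|]; lra.
Qed.

Lemma lacunary_sum_le x m : 0 < x ->
  sum_n (lacunary_profile K nu beta x) m <= Rpower x (nu + beta) * lacunary_const K nu beta.
Proof.
  intros Hx. pose proof q2_bounds as Hq2.
  set (y := Rpower x (nu + beta)). pose proof (Rpower_pos x (nu + beta)) as Hy. fold y in Hy.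
  destruct (exists_delta_le x Hx) as [n Hn].
  destruct (exists_least_nat (fun n => delta K (S n) <= x) n Hn) as [N [HN HNmin]].
  unfold lacunary_const. fold q1 q2.
  replace (y * (/ q2 * (q2 / (1 - q2)) + 1 + / q2 * (q1 / (1 - q1))))
    with (y / q2 * (q2 / (1 - q2)) + y + y / q2 * (q1 / (1 - q1))) by (field; lra).
  assert (Hq2i : 1 <= / q2) by (rewrite <- Rinv_1; apply Rinv_le_contravar; lra).
  apply (sum_n_two_sided_geometric_le _ _ _ _ _ N); try lra.
  - apply Rdiv_le_0_compat; lra.
  - intros k Hk. eapply Rle_trans.
    + apply (lacunary_profile_le_before x (N - 1) k Hx); [|lia].
      pose proof (HNmin (N - 1)%nat ltac:(lia)). lra.
    + fold y. replace (N - k)%nat with (S (N - 1 - k)) by lia. simpl.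
      right. field. lra.
  - pose proof (lacunary_profile_le_after x N N Hx HN (le_n N)) as H.
    rewrite Nat.sub_diag, pow_O, Rmult_1_r in H. exact H.
  - intros k Hk. eapply Rle_trans; [apply (lacunary_profile_le_after x N k Hx HN); lia|].
    fold y. pose proof (pow_le q1 (k - N) (Rlt_le _ _ (proj1 Hq1))).
    unfold Rdiv. rewrite Rmult_assoc. apply Rmult_le_compat_l; [lra|]. nra.
Qed.

Lemma Cmod_term_le_profile a M (z : C) x k : (forall n, Cmod (a n) <= M) -> Cmod z < 1 -> 0 < x ->
  x <= Cmod (Cminus (RtoC (1 + delta K (S k))) z) - delta K (S k) ->
  Cmod (term K nu beta a z k) <= M * lacunary_profile K nu beta x k.
Proof.
  intros HM Hz Hx Hw. unfold term. rewrite Cmod_mult.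
  pose proof (delta_pos K HK (S k)).
  apply Rmult_le_compat; auto using Cmod_ge_0.
  apply Cmod_fn_le; auto; lra.
Qed.

Lemma Cmod_Phi_le a M (z : C) x : 0 <= M -> (forall n, Cmod (a n) <= M) -> Cmod z < 1 -> 0 < x ->
  (forall n, (delta K n + x) / 16 <= Cmod (Cminus (RtoC (1 + delta K n)) z)) ->
  Cmod (Phi K nu beta a z) <= M * Rpower 16 (- beta) * lacunary_const K nu beta * Rpower x (nu + beta).
Proof.
  intros HM0 HM Hz Hx HW.
  apply (Cmod_is_series_le _ _ _ (is_series_term K nu beta HK Hnu Hbeta a z (ex_intro _ M HM) Hz)).
  intros m.
  assert (Hk : forall k, Cmod (term K nu beta a z k)
                         <= (M * Rpower 16 (- beta)) * lacunary_profile K nu beta x k).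
  { intros k. unfold term, lacunary_profile. rewrite Cmod_mult.
    pose proof (delta_pos K HK (S k)).
    assert (Cmod (fn K nu beta (S k) z) <= Rpower (delta K (S k)) nu * Rpower ((delta K (S k) + x) / 16) beta)
      by (apply (Cmod_fn_le K nu beta Hbeta); [apply Rdiv_lt_0_compat | apply HW | ]; lra).
    rewrite Rpower_div in H0 by lra.
    replace (M * Rpower 16 (- beta) * (Rpower (delta K (S k)) nu * Rpower (delta K (S k) + x) beta))
      with (M * (Rpower (delta K (S k)) nu * (Rpower (delta K (S k) + x) beta * Rpower 16 (- beta)))) by ring.
    apply Rmult_le_compat; auto using Cmod_ge_0. }
  eapply Rle_trans; [apply sum_n_m_le; exact Hk|].
  change (sum_n_m ?f 0 m) with (sum_n f m).
  rewrite (sum_n_mult_l (K := R_Ring)). change (mult ?a ?b) with (a * b).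
  pose proof (lacunary_sum_le x m Hx).
  assert (0 <= M * Rpower 16 (- beta)) by (apply Rmult_le_pos; [|left; apply Rpower_pos]; auto).
  replace (M * Rpower 16 (- beta) * lacunary_const K nu beta * Rpower x (nu + beta))
    with (M * Rpower 16 (- beta) * (Rpower x (nu + beta) * lacunary_const K nu beta)) by ring.
  apply Rmult_le_compat_l; auto.
Qed.

Lemma Cmod_Phi_minus_peak_le a M k0 (z : C) : 0 <= M -> (forall n, Cmod (a n) <= M) ->
  Cmod z <= 1 - delta K (S k0) ->
  Cmod (Cminus (Phi K nu beta a z) (term K nu beta a z k0))
  <= M * Rpower (delta K (S k0)) (nu + beta) * (q2 / (1 - q2) + q1 / (1 - q1)).
Proof.
  intros HM0 HM Hz.
  pose proof (delta_pos K HK (S k0)) as Hd. set (d := delta K (S k0)) in *.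
  set (y := Rpower d (nu + beta)). pose proof (Rpower_pos d (nu + beta)) as Hy. fold y in Hy.
  pose proof q2_bounds as Hq2.
  pose proof (is_series_minus _ _ _ _
    (is_series_term K nu beta HK Hnu Hbeta a z (ex_intro _ M HM) ltac:(lra))
    (is_series_single (term K nu beta a z k0) k0)) as Hrest.
  replace (M * y * (q2 / (1 - q2) + q1 / (1 - q1)))
    with (M * y * (q2 / (1 - q2)) + 0 + M * y * (q1 / (1 - q1))) by ring.
  apply (Cmod_is_series_le _ _ _ Hrest). intros m.
  apply (sum_n_two_sided_geometric_le _ _ _ _ _ k0); try (apply Rmult_le_pos); try lra.
  - intros k Hk. unfold single. destruct (Nat.eq_dec k k0) as [E|_]; [lia|].
    change (Cmod (Cminus (term K nu beta a z k) (RtoC 0)) <= M * y * q2 ^ (k0 - k)).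
    replace (Cminus (term K nu beta a z k) (RtoC 0)) with (term K nu beta a z k) by ring.
    eapply Rle_trans; [apply (Cmod_term_le_profile a M z d); auto; try lra|].
    + pose proof (Cmod_sub_ge (1 + delta K (S k)) z). lra.
    + rewrite Rmult_assoc. apply Rmult_le_compat_l; auto.
      apply lacunary_profile_le_before; auto; [apply Rle_refl | lia].
  - unfold single. destruct (Nat.eq_dec k0 k0) as [_|E]; [|lia].
    change (Cmod (Cminus (term K nu beta a z k0) (term K nu beta a z k0)) <= 0).
    replace (Cminus (term K nu beta a z k0) (term K nu beta a z k0)) with (RtoC 0) by ring.
    rewrite Cmod_0. lra.
  - intros k Hk. unfold single. destruct (Nat.eq_dec k k0) as [E|_]; [lia|].
    change (Cmod (Cminus (term K nu beta a z k) (RtoC 0)) <= M * y * q1 ^ (k - k0)).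
    replace (Cminus (term K nu beta a z k) (RtoC 0)) with (term K nu beta a z k) by ring.
    eapply Rle_trans; [apply (Cmod_term_le_profile a M z d); auto; try lra|].
    + pose proof (Cmod_sub_ge (1 + delta K (S k)) z). lra.
    + rewrite Rmult_assoc. apply Rmult_le_compat_l; auto.
      apply lacunary_profile_le_after; auto; [apply Rle_refl | lia].
Qed.

Lemma Cmod_term_peak_ge a M k0 t : 0 <= M -> M / 2 <= Cmod (a k0) -> 0 <= t <= delta K (S k0) ->
  M / 2 * (Rpower 4 beta * Rpower (delta K (S k0)) (nu + beta))
  <= Cmod (term K nu beta a (Cmult (RtoC (1 - delta K (S k0))) (cis t)) k0).
Proof.
  intros HM0 Hak0 Ht.
  pose proof (delta_pos K HK (S k0)) as Hd. pose proof (delta_le_1 K HK (S k0)) as Hd1.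
  set (d := delta K (S k0)) in *.
  set (z := Cmult (RtoC (1 - d)) (cis t)).
  assert (Hz : Cmod z = 1 - d) by (apply Cmod_circle; lra).
  unfold term. rewrite Cmod_mult, Cmod_fn by (unfold d in *; lra). fold d.
  pose proof (Cmod_sub_ge (1 + d) z) as Hlow.
  pose proof (Cmod_shifted_circle_le d t ltac:(lra) ltac:(lra)) as Hup.
  unfold shifted_circle in Hup. fold z in Hup.
  assert (Rpower (4 * d) beta <= Rpower (Cmod (Cminus (RtoC (1 + d)) z)) beta)
    by (apply Rpower_le_nonpos; lra).
  assert (E : Rpower d nu * Rpower (4 * d) beta = Rpower 4 beta * Rpower d (nu + beta)).
  { rewrite <- Rpower_mult_distr, Rpower_plus by lra. ring. }
  apply Rmult_le_compat; [lra | apply Rmult_le_pos; left; apply Rpower_pos | lra |].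
  rewrite <- E. apply Rmult_le_compat_l; [left; apply Rpower_pos | auto].
Qed.

Lemma Cmod_Phi_ge_peak a M k0 t : 0 <= M -> (forall n, Cmod (a n) <= M) -> M / 2 <= Cmod (a k0) ->
  0 <= t <= delta K (S k0) ->
  M * Rpower (delta K (S k0)) (nu + beta) * (Rpower 4 beta / 2 - (q2 / (1 - q2) + q1 / (1 - q1)))
  <= Cmod (Phi K nu beta a (Cmult (RtoC (1 - delta K (S k0))) (cis t))).
Proof.
  intros HM0 HM Hak0 Ht.
  set (z := Cmult (RtoC (1 - delta K (S k0))) (cis t)).
  pose proof (delta_pos K HK (S k0)). pose proof (delta_le_1 K HK (S k0)).
  pose proof (Cmod_term_peak_ge a M k0 t HM0 Hak0 Ht) as Hpeak. fold z in Hpeak.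
  pose proof (Cmod_Phi_minus_peak_le a M k0 z HM0 HM ltac:(unfold z; rewrite Cmod_circle; lra)) as Hrest.
  pose proof (Cmod_triangle (Phi K nu beta a z) (Cminus (term K nu beta a z k0) (Phi K nu beta a z))) as Htri.
  replace (Cplus (Phi K nu beta a z) (Cminus (term K nu beta a z k0) (Phi K nu beta a z)))
    with (term K nu beta a z k0) in Htri by ring.
  replace (Cminus (term K nu beta a z k0) (Phi K nu beta a z))
    with (Copp (Cminus (Phi K nu beta a z) (term K nu beta a z k0))) in Htri by ring.
  rewrite Cmod_opp in Htri. fold q1 q2. lra.
Qed.

End LacunarySum.

(** * Norm estimates *)

Lemma Lub_Rbar_Cmod_finite (a : nat -> C) : bounded_seq a ->
  Lub_Rbar (fun x => exists n, x = Cmod (a n)) = Finite (linf_norm a).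
Proof.
  intros [M HM]. unfold linf_norm.
  destruct (Lub_Rbar_correct (fun x => exists n, x = Cmod (a n))) as [Hub Hleast].
  assert (H1 : Rbar_le (Lub_Rbar (fun x => exists n, x = Cmod (a n))) M)
    by (apply Hleast; intros x [n Hn]; subst; apply HM).
  assert (H2 : Rbar_le (Cmod (a 0%nat)) (Lub_Rbar (fun x => exists n, x = Cmod (a n))))
    by (apply Hub; exists 0%nat; reflexivity).
  destruct (Lub_Rbar _); simpl in *; easy.
Qed.

Lemma Cmod_le_linf_norm (a : nat -> C) n : bounded_seq a -> Cmod (a n) <= linf_norm a.
Proof.
  intros Ha. destruct (Lub_Rbar_correct (fun x => exists n, x = Cmod (a n))) as [Hub _].
  rewrite Lub_Rbar_Cmod_finite in Hub by exact Ha. apply (Hub (Cmod (a n))). exists n; reflexivity.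
Qed.

Lemma linf_norm_nonneg (a : nat -> C) : bounded_seq a -> 0 <= linf_norm a.
Proof. intros Ha. eapply Rle_trans; [apply Cmod_ge_0 | apply (Cmod_le_linf_norm a 0 Ha)]. Qed.

Lemma linf_norm_half_attained (a : nat -> C) : bounded_seq a -> 0 < linf_norm a ->
  exists n, linf_norm a / 2 <= Cmod (a n).
Proof.
  intros Ha HL. apply NNPP. intros Hno.
  destruct (Lub_Rbar_correct (fun x => exists n, x = Cmod (a n))) as [_ Hleast].
  rewrite Lub_Rbar_Cmod_finite in Hleast by exact Ha.
  assert (Hub : is_ub_Rbar (fun x => exists n, x = Cmod (a n)) (linf_norm a / 2)).
  { intros x [n Hx]. subst. simpl. apply Rnot_lt_le. intros Hc. apply Hno. exists n. lra. }
  specialize (Hleast _ Hub). simpl in Hleast. lra.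
Qed.

Lemma Hnorm_le p alpha f B : (forall r, 0 <= r < 1 -> rpow (1 - r) alpha * Mp p r f <= B) ->
  Rbar_le (Hnorm p alpha f) B.
Proof.
  intros H. apply Lub_Rbar_correct. intros x [r [Hr Hx]]. subst. apply H; auto.
Qed.

Lemma Hnorm_ge p alpha f r : 0 <= r < 1 -> Rbar_le (rpow (1 - r) alpha * Mp p r f) (Hnorm p alpha f).
Proof. intros Hr. apply Lub_Rbar_correct. exists r. auto. Qed.

Lemma Hnorm_finite p alpha f B : (forall r, 0 <= r < 1 -> rpow (1 - r) alpha * Mp p r f <= B) ->
  is_finite (Hnorm p alpha f).
Proof.
  intros H. pose proof (Hnorm_le p alpha f B H). pose proof (Hnorm_ge p alpha f 0 ltac:(lra)).
  destruct (Hnorm p alpha f); simpl in *; easy.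
Qed.

Lemma geometric_ratio_le q : 0 < q <= 1 / 2 -> q / (1 - q) <= 2 * q.
Proof. intros H. apply (Rmult_le_reg_r (1 - q)); [lra|]. unfold Rdiv. rewrite Rmult_assoc, Rinv_l; nra. Qed.

Section Estimates.

Variables (p alpha beta K : R).
Hypotheses (Hp : 0 < p) (Halpha : 0 < alpha) (Hbp : beta * p < -1)
  (Hnu : 0 < - (alpha + beta + 1 / p)) (HK : 1 < K).

Let nu := - (alpha + beta + 1 / p).

Lemma beta_neg : beta < 0.
Proof. destruct (Rle_dec 0 beta); [|lra]. assert (0 <= beta * p) by (apply Rmult_le_pos; lra). lra. Qed.

Lemma nu_plus_beta : nu + beta = - (alpha + 1 / p).
Proof. unfold nu. ring. Qed.

Lemma nu_plus_beta_neg : nu + beta < 0.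
Proof. rewrite nu_plus_beta. assert (0 < 1 / p) by (apply Rdiv_lt_0_compat; lra). lra. Qed.

Let Hb : beta <= 0 := Rlt_le _ _ beta_neg.

Lemma weighted_Mp_Phi_le a : bounded_seq a -> forall r, 0 <= r < 1 ->
  rpow (1 - r) alpha * Mp p r (Phi K nu beta a)
  <= (Rpower 16 (- beta) * lacunary_const K nu beta * Rpower (/ (PI * (alpha * p))) (1 / p)) * linf_norm a.
Proof.
  intros Ha r Hr. pose proof (linf_norm_nonneg a Ha) as HM0. pose proof nu_plus_beta_neg as Hneg.
  set (M := linf_norm a) in *.
  set (A := M * Rpower 16 (- beta) * lacunary_const K nu beta).
  assert (HA : 0 <= A).
  { apply Rmult_le_pos; [apply Rmult_le_pos; [lra | left; apply Rpower_pos]|].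
    left; apply lacunary_const_pos; auto. }
  assert (Hgp : (nu + beta) * p + 1 = - (alpha * p)) by (rewrite nu_plus_beta; field; lra).
  pose proof PI_RGT_0 as HPI. pose proof PI_4 as HPI4.
  assert (Hbound : forall t s, 0 <= s <= PI -> s = t \/ s = 2 * PI - t ->
            Cmod (Phi K nu beta a (Cmult (RtoC r) (cis t))) <= A * Rpower ((1 - r) + s) (nu + beta)).
  { intros t s Hs Hst.
    apply (Cmod_Phi_le K nu beta HK Hnu Hb Hneg a M); auto;
      [intros; apply Cmod_le_linf_norm; auto | rewrite Cmod_circle; lra | lra |].
    intros n. pose proof (Cmod_shifted_circle_ge (delta K n) r s
                            (conj (delta_pos K HK n) (delta_le_1 K HK n)) Hr Hs) as Hw.
    replace (Cmod (shifted_circle (delta K n) r s)) with (Cmod (shifted_circle (delta K n) r t)) in Hw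
      by (destruct Hst as [-> | ->]; [reflexivity | apply Cmod_shifted_circle_reflect]).
    unfold shifted_circle in Hw. lra. }
  assert (HMp : Mp p r (Phi K nu beta a)
                <= A * Rpower (1 - r) ((nu + beta) + 1 / p) * Rpower (/ (PI * (- ((nu + beta) * p + 1)))) (1 / p)).
  { apply Mp_upper; auto; [apply (Phi_analytic K nu beta HK Hnu Hb a Ha) | nra | |].
    - intros t Ht. apply Hbound; [lra | auto].
    - intros t Ht. apply Hbound; [lra | auto]. }
  rewrite Hgp, Ropp_involutive, nu_plus_beta in HMp.
  rewrite rpow_of_pos by lra.
  eapply Rle_trans; [apply Rmult_le_compat_l; [left; apply Rpower_pos | exact HMp]|].
  replace (- (alpha + 1 / p) + 1 / p) with (- alpha) by ring.
  replace (Rpower (1 - r) alpha * (A * Rpower (1 - r) (- alpha) * Rpower (/ (PI * (alpha * p))) (1 / p)))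
    with (A * Rpower (/ (PI * (alpha * p))) (1 / p) * (Rpower (1 - r) alpha * Rpower (1 - r) (- alpha))) by ring.
  rewrite <- Rpower_plus, Rplus_opp_r, Rpower_O by lra. unfold A, M. lra.
Qed.

Hypotheses (Hq1 : Rpower (/ K) nu <= Rpower 4 beta / 16)
  (Hq2 : Rpower (/ K) (- (nu + beta)) <= Rpower 4 beta / 16).

Lemma peak_factor_ge : Rpower 4 beta / 4 <=
  Rpower 4 beta / 2 - (Rpower (/ K) (- (nu + beta)) / (1 - Rpower (/ K) (- (nu + beta)))
                       + Rpower (/ K) nu / (1 - Rpower (/ K) nu)).
Proof.
  pose proof (Rpower_inv_lt_1 K nu HK Hnu). pose proof (q2_bounds K nu beta HK nu_plus_beta_neg).
  assert (Rpower 4 beta <= 1) by (apply Rpower_le_1_nonpos; lra).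
  pose proof (geometric_ratio_le (Rpower (/ K) nu) ltac:(lra)).
  pose proof (geometric_ratio_le (Rpower (/ K) (- (nu + beta))) ltac:(lra)).
  lra.
Qed.

Lemma weighted_Mp_Phi_ge_peak a k0 : bounded_seq a -> linf_norm a / 2 <= Cmod (a k0) ->
  Rpower (2 * PI) (- (1 / p)) * (Rpower 4 beta / 4) * linf_norm a
  <= rpow (1 - (1 - delta K (S k0))) alpha * Mp p (1 - delta K (S k0)) (Phi K nu beta a).
Proof.
  intros Ha Hak0. pose proof (linf_norm_nonneg a Ha) as HM0.
  pose proof (delta_pos K HK (S k0)) as Hd. pose proof (delta_le_1 K HK (S k0)) as Hd1.
  pose proof PI_RGT_0. pose proof PI2_3_2. pose proof (Rpower_pos 4 beta).
  set (M := linf_norm a) in *. set (d := delta K (S k0)) in *.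
  set (L := M * Rpower d (nu + beta) * (Rpower 4 beta / 4)).
  assert (HL : 0 <= L) by (apply Rmult_le_pos; [apply Rmult_le_pos; [|left; apply Rpower_pos]|]; lra).
  assert (Hpt : forall t, 0 < t < d -> L <= Cmod (Phi K nu beta a (Cmult (RtoC (1 - d)) (cis t)))).
  { intros t Ht. eapply Rle_trans; [|apply (Cmod_Phi_ge_peak K nu beta HK Hnu Hb nu_plus_beta_neg a M k0 t);
                                      auto; [intros; apply Cmod_le_linf_norm; auto | split; [lra | exact (Rlt_le _ _ (proj2 Ht))]]].
    apply Rmult_le_compat_l; [apply Rmult_le_pos; [lra | left; apply Rpower_pos] | apply peak_factor_ge]. }
  pose proof (Mp_lower p (1 - d) (Phi K nu beta a) Hp ltac:(lra)
                (Phi_analytic K nu beta HK Hnu Hb a Ha) d L ltac:(lra) HL Hpt) as HMp.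
  replace (1 - (1 - d)) with d by ring. rewrite rpow_of_pos by lra.
  eapply Rle_trans; [|apply Rmult_le_compat_l; [left; apply Rpower_pos | exact HMp]].
  rewrite Rpower_div by lra. unfold L.
  replace (Rpower d alpha * (Rpower d (1 / p) * Rpower (2 * PI) (- (1 / p)) * (M * Rpower d (nu + beta) * (Rpower 4 beta / 4))))
    with (Rpower (2 * PI) (- (1 / p)) * (Rpower 4 beta / 4) * M * (Rpower d (alpha + 1 / p + (nu + beta))))
    by (rewrite !Rpower_plus; ring).
  rewrite nu_plus_beta. replace (alpha + 1 / p + - (alpha + 1 / p)) with 0 by ring.
  rewrite Rpower_O by lra. lra.
Qed.

Lemma Hnorm_Phi_ge a : bounded_seq a ->
  Rbar_le (Rpower (2 * PI) (- (1 / p)) * (Rpower 4 beta / 4) * linf_norm a) (Hnorm p alpha (Phi K nu beta a)).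
Proof.
  intros Ha. pose proof (linf_norm_nonneg a Ha).
  destruct (Req_dec (linf_norm a) 0) as [E|E].
  - rewrite E, Rmult_0_r.
    eapply Rbar_le_trans; [|apply (Hnorm_ge p alpha _ 0); lra].
    apply Rmult_le_pos; [apply rpow_nonneg | unfold Mp; apply rpow_nonneg].
  - destruct (linf_norm_half_attained a Ha ltac:(lra)) as [k0 Hk0].
    pose proof (delta_pos K HK (S k0)). pose proof (delta_le_1 K HK (S k0)).
    eapply Rbar_le_trans; [|apply (Hnorm_ge p alpha _ (1 - delta K (S k0))); lra].
    apply weighted_Mp_Phi_ge_peak; auto.
Qed.

Lemma Phi_injective a b : bounded_seq a -> bounded_seq b ->
  (forall z, in_disk z -> Phi K nu beta a z = Phi K nu beta b z) -> forall n, a n = b n.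
Proof.
  intros Ha Hb' Heq n.
  set (c := fun n => Cplus (Cmult (RtoC 1) (a n)) (Cmult (RtoC (-1)) (b n))).
  assert (Hc : bounded_seq c) by (apply bounded_seq_lin_comb; auto).
  assert (Hzero : Rbar_le (Hnorm p alpha (Phi K nu beta c)) 0).
  { apply Hnorm_le. intros r Hr. rewrite Mp_zero; [lra | auto |].
    intros z Hz. unfold c. rewrite Phi_linear, Heq by auto. ring. }
  pose proof (Rbar_le_trans _ _ _ (Hnorm_Phi_ge c Hc) Hzero) as Hle. simpl in Hle.
  assert (Hpos : 0 < Rpower (2 * PI) (- (1 / p)) * (Rpower 4 beta / 4))
    by (pose proof (Rpower_pos (2 * PI) (- (1 / p))); pose proof (Rpower_pos 4 beta); nra).
  assert (linf_norm c <= 0) by nra.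
  pose proof (Cmod_le_linf_norm c n Hc) as Hcn.
  assert (E : c n = RtoC 0) by (apply Cmod_eq_0; pose proof (Cmod_ge_0 (c n)); lra).
  unfold c in E.
  replace (a n) with (Cplus (Cplus (Cmult (RtoC 1) (a n)) (Cmult (RtoC (-1)) (b n))) (b n)) by ring.
  rewrite E. ring.
Qed.

End Estimates.

Lemma large_K_small_ratios (nu beta : R) : 0 < nu -> nu + beta < 0 ->
  exists K0, 1 < K0 /\ forall K, K0 < K ->
    Rpower (/ K) nu <= Rpower 4 beta / 16 /\ Rpower (/ K) (- (nu + beta)) <= Rpower 4 beta / 16.
Proof.
  intros Hnu Hneg. assert (Heta : 0 < Rpower 4 beta / 16) by (pose proof (Rpower_pos 4 beta); lra).
  destruct (Rpower_inv_le_eventually nu _ Hnu Heta) as [K1 [HK1 H1]].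
  destruct (Rpower_inv_le_eventually (- (nu + beta)) _ ltac:(lra) Heta) as [K2 [HK2 H2]].
  exists (Rmax K1 K2). split; [eapply Rlt_le_trans; [exact HK1 | apply Rmax_l]|].
  intros K HK. pose proof (Rmax_l K1 K2). pose proof (Rmax_r K1 K2). split; [apply H1 | apply H2]; lra.
Qed.

Theorem proposition6p7 (p alpha beta : R) :
  0 < p -> 0 < alpha -> beta * p < -1 -> 0 < - (alpha + beta + 1 / p) ->
  let nu := - (alpha + beta + 1 / p) in
  exists K0 : R, 1 < K0 /\ forall K : R, K0 < K ->
    (* the series converges on the disk for every bounded sequence *)
    (forall a, bounded_seq a -> forall z, in_disk z ->
       @ex_series C_AbsRing C_NormedModule (term K nu beta a z)) /\
    (* X_{nu,beta} is contained in H(p,infty,alpha) *)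
    (forall a, bounded_seq a -> in_H p alpha (Phi K nu beta a)) /\
    (* Phi is linear *)
    (forall a b (l m : C), bounded_seq a -> bounded_seq b -> forall z, in_disk z ->
       Phi K nu beta (fun n => Cplus (Cmult l (a n)) (Cmult m (b n))) z
       = Cplus (Cmult l (Phi K nu beta a z)) (Cmult m (Phi K nu beta b z))) /\
    (* Phi is injective (hence a bijection onto X_{nu,beta}) *)
    (forall a b, bounded_seq a -> bounded_seq b ->
       (forall z, in_disk z -> Phi K nu beta a z = Phi K nu beta b z) ->
       forall n, a n = b n) /\
    (* two-sided norm equivalence *)
    (exists c C0 : R, 0 < c /\ 0 < C0 /\
       forall a, bounded_seq a ->
         Rbar_le (Finite (c * linf_norm a)) (Hnorm p alpha (Phi K nu beta a)) /\
         Rbar_le (Hnorm p alpha (Phi K nu beta a)) (Finite (C0 * linf_norm a))).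
Proof.
  intros Hp Halpha Hbp Hnu nu.
  pose proof (beta_neg p beta Hp Hbp) as Hb.
  pose proof (nu_plus_beta_neg p alpha beta Hp Halpha) as Hneg.
  destruct (large_K_small_ratios nu beta Hnu Hneg) as [K0 [HK0 Hsmall]].
  exists K0. split; [exact HK0|]. intros K HK. destruct (Hsmall K HK) as [Hq1 Hq2].
  assert (HK1 : 1 < K) by lra.
  assert (Hup := weighted_Mp_Phi_le p alpha beta K Hp Halpha Hbp Hnu HK1).
  split; [|split; [|split; [|split]]].
  - intros a Ha z Hz. eexists. apply (is_series_term K nu beta); auto; lra.
  - intros a Ha. split; [apply Phi_analytic; auto; lra|]. exact (Hnorm_finite _ _ _ _ (Hup a Ha)).
  - intros a b l m Ha Hb' z Hz. apply Phi_linear; auto; lra.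
  - exact (Phi_injective p alpha beta K Hp Halpha Hbp Hnu HK1 Hq1 Hq2).
  - exists (Rpower (2 * PI) (- (1 / p)) * (Rpower 4 beta / 4)),
      (Rpower 16 (- beta) * lacunary_const K nu beta * Rpower (/ (PI * (alpha * p))) (1 / p)).
    pose proof (Rpower_pos 4 beta). pose proof (lacunary_const_pos K nu beta HK1 Hnu Hneg).
    repeat split.
    + apply Rmult_lt_0_compat; [apply Rpower_pos | lra].
    + apply Rmult_lt_0_compat; [apply Rmult_lt_0_compat; [apply Rpower_pos | lra] | apply Rpower_pos].
    + apply Hnorm_Phi_ge; auto.
    + apply Hnorm_le, Hup. auto.
Qed.
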